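(* There exist $R>0$ and $\upsilon\in(0,1)$, independent of $t$, such that for every $t>0$ there is a closed, real, positive $(1,1)$-form $\check\omega_t$ on $\tilde X$ satisfying: (1) $\check\omega_t=\tilde\omega_t$ on $\{p\in\tilde X: r(p)\le tR/2\}$; (2) $\check\omega_t=\hat\omega$ on a neighbourhood of $\{p\in\tilde X: r(p)\ge tR\}$; (3) $\check\omega_t^2\ge 2\upsilon^2\,\mathrm{vol}_0$ on $\tilde X\setminus\mathfrak{E}$, with equality holding at least on $\{p: r(p)=\mathfrak{r}_t\}$ for some $\mathfrak{r}_t\in(tR/2,tR)$.
   Context: Let $\tilde X=\{((U^1,U^2),[W^1:W^2])\in\mathbb{C}^2\times\mathbb{CP}^1: U^1(W^2)^2=U^2(W^1)^2\}\cong T^*\mathbb{CP}^1$, a complex surface, with the blow-down map $\rho:\tilde X\to\mathbb{C}^2/\{\pm1\}$, $((U^1,U^2),[W^1:W^2])\mapsto\pm(\sqrt{U^1},\sqrt{U^2})$ (square roots chosen with $\sqrt{U^1}W^2=\sqrt{U^2}W^1$); $\mathfrak{E}=\rho^{-1}(0)\cong\mathbb{CP}^1$, and $\rho$ identifies $\tilde X\setminus\mathfrak E$ biholomorphically with $(\mathbb{C}^2/\{\pm1\})\setminus\{0\}$. On $\mathbb{C}^2$ with coordinates $w^1=x^1+iy^1$, $w^2=x^2+iy^2$, put $r^2=|w^1|^2+|w^2|^2$ (pulled back to $\tilde X$ via $\rho$, with $r=0$ on $\mathfrak E$), $\hat\omega=\frac i2(dw^1\wedge d\bar w^1+dw^2\wedge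 d\bar w^2)$, $\mathrm{vol}_0=dx^1\wedge dy^1\wedge dx^2\wedge dy^2$. The Eguchi--Hanson forms are $\tilde\omega_t=\frac14dd^c\big[\sqrt{r^4+t^4}+t^2\log\big(\frac{r^2}{\sqrt{r^4+t^4}+t^2}\big)\big]$ on $\tilde X\setminus\mathfrak E$, where $d^c=i(\bar\partial-\partial)$; each $\tilde\omega_t$ ($t>0$) extends smoothly over $\mathfrak E$ to a Ricci-flat Kähler form on $\tilde X$. *)

From Stdlib Require Import Reals.
From Coquelicot Require Import Coquelicot.
Open Scope R_scope.

Definition C2 := (C * C)%type.
Definition zero2 : C2 := (RtoC 0, RtoC 0).
Definition nonzero2 (w : C2) : Prop := w <> zero2.
Definition C2neg (w : C2) : C2 := (Copp (fst w), Copp (snd w)).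

(** r = sqrt(|w1|^2+|w2|^2). Via the blow-down rho, points of X~ \ E are the
    points w <> 0 of C^2 modulo w ~ -w; r = 0 exactly on E. *)
Definition r_of (w : C2) : R := sqrt (Cmod (fst w) ^ 2 + Cmod (snd w) ^ 2).
Definition dist2 (w w' : C2) : R :=
  r_of (Cminus (fst w) (fst w'), Cminus (snd w) (snd w')).

Definition is_open2 (V : C2 -> Prop) : Prop :=
  forall w, V w -> exists d, 0 < d /\ forall w', dist2 w' w < d -> V w'.

Definition shift (k : nat) (s : R) (w : C2) : C2 :=
  match w with ((x1, y1), (x2, y2)) =>
  match k with
  | O => ((x1 + s, y1), (x2, y2))
  | 1%nat => ((x1, y1 + s), (x2, y2))
  | 2%nat => ((x1, y1), (x2 + s, y2))
  | _ => ((x1, y1), (x2, y2 + s))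
  end end.

Definition rdiff_at (k : nat) (f : C2 -> R) (w : C2) : Prop :=
  ex_derive (fun s => f (shift k s w)) 0.
Definition rpartial (k : nat) (f : C2 -> R) (w : C2) : R :=
  Derive (fun s => f (shift k s w)) 0.

Definition cont_on (V : C2 -> Prop) (f : C2 -> R) : Prop :=
  forall w, V w -> forall eps, 0 < eps -> exists d, 0 < d /\
    forall w', V w' -> dist2 w' w < d -> Rabs (f w' - f w) < eps.

Fixpoint Ck (n : nat) (V : C2 -> Prop) (f : C2 -> R) : Prop :=
  match n with
  | O => cont_on V f
  | S m => cont_on V f /\
      forall k, (k < 4)%nat ->
        (forall w, V w -> rdiff_at k f w) /\ Ck m V (rpartial k f)
  end.
Definition smooth_on (V : C2 -> Prop) (f : C2 -> R) : Prop := forall n, Ck n V f.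
Definition smoothC_on (V : C2 -> Prop) (f : C2 -> C) : Prop :=
  smooth_on V (fun w => Re (f w)) /\ smooth_on V (fun w => Im (f w)).

(** Real partials of complex-valued functions and Wirtinger derivatives
    d/dw_j = (d/dx_j - i d/dy_j)/2, d/dwbar_j = (d/dx_j + i d/dy_j)/2. *)
Definition cpartial (k : nat) (f : C2 -> C) (w : C2) : C :=
  (rpartial k (fun p => Re (f p)) w, rpartial k (fun p => Im (f p)) w).
Definition dW (j : nat) (f : C2 -> C) (w : C2) : C :=
  Cmult (RtoC (/2)) (Cminus (cpartial (2 * j) f w) (Cmult Ci (cpartial (2 * j + 1) f w))).
Definition dWbar (j : nat) (f : C2 -> C) (w : C2) : C :=
  Cmult (RtoC (/2)) (Cplus (cpartial (2 * j) f w) (Cmult Ci (cpartial (2 * j + 1) f w))).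

(** A (1,1)-form  omega = (i/2) sum_{j,k} h_{j kbar} dw^j /\ dwbar^k  on
    (an open subset of) X~ \ E, written in the w-coordinates: indices 0,1. *)
Definition mat2 := nat -> nat -> C.
Definition form11 := C2 -> mat2.

Definition hermitian (M : mat2) : Prop :=
  forall j k, (j < 2)%nat -> (k < 2)%nat -> M k j = Cconj (M j k).

Definition quad (M : mat2) (v0 v1 : C) : C :=
  Cplus (Cplus (Cmult (Cmult v0 (M 0%nat 0%nat)) (Cconj v0))
               (Cmult (Cmult v0 (M 0%nat 1%nat)) (Cconj v1)))
        (Cplus (Cmult (Cmult v1 (M 1%nat 0%nat)) (Cconj v0))
               (Cmult (Cmult v1 (M 1%nat 1%nat)) (Cconj v1))).
Definition posdef (M : mat2) : Prop :=
  forall v0 v1, (v0, v1) <> zero2 -> 0 < Re (quad M v0 v1).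

(** Pullback of coefficients under a holomorphic map with Jacobian J
    (J j a = d w^j / d zeta^a):  G_{a bbar} = sum_{j,k} J_{ja} h_{j kbar} conj(J_{kb}). *)
Definition pullback (J : mat2) (M : mat2) : mat2 := fun a b =>
  Cplus (Cplus (Cmult (Cmult (J 0%nat a) (M 0%nat 0%nat)) (Cconj (J 0%nat b)))
               (Cmult (Cmult (J 0%nat a) (M 0%nat 1%nat)) (Cconj (J 1%nat b))))
        (Cplus (Cmult (Cmult (J 1%nat a) (M 1%nat 0%nat)) (Cconj (J 0%nat b)))
               (Cmult (Cmult (J 1%nat a) (M 1%nat 1%nat)) (Cconj (J 1%nat b)))).

(** The two standard holomorphic charts of X~, with coordinates zeta = (z,u):
    chart 1 (W^1 <> 0): [W] = [1:z], U^1 = u, U^2 = u z^2;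
    chart 2 (W^2 <> 0): [W] = [z:1], U^2 = u, U^1 = u z^2.
    For u = s^2 <> 0, rho(z,u) = +-(s, z s) (chart 1), +-(z s, s) (chart 2);
    u = 0 is E. [chart_pt c z s] is the point w and [chart_jac c z s] the
    Jacobian d w / d(z,u) of the local inverse branch w(z,u). *)
Definition chart_pt (c : bool) (z s : C) : C2 :=
  if c then (s, Cmult z s) else (Cmult z s, s).
Definition chart_jac (c : bool) (z s : C) : mat2 := fun j a =>
  let inv2s := Cinv (Cmult (RtoC 2) s) in
  match c, j, a with
  | true, O, O => RtoC 0
  | true, O, _ => inv2s
  | true, _, O => s
  | true, _, _ => Cmult z inv2s
  | false, O, O => s
  | false, O, _ => Cmult z inv2s
  | false, _, O => RtoC 0
  | false, _, _ => inv2s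
  end.

Definition extends_pos_over_E (h : form11) : Prop :=
  forall c : bool, exists G : C2 -> mat2,
    (forall a b, (a < 2)%nat -> (b < 2)%nat ->
       smoothC_on (fun _ => True) (fun p => G p a b)) /\
    (forall z s, s <> RtoC 0 -> forall a b, (a < 2)%nat -> (b < 2)%nat ->
       G (z, Cmult s s) a b = pullback (chart_jac c z s) (h (chart_pt c z s)) a b) /\
    (forall z, posdef (G (z, RtoC 0))).

(** A closed, real, positive (1,1)-form on X~, represented by its coefficients
    in the w-coordinates on X~ \ E = (C^2 \ {0})/{+-1}. *)
Definition closed_real_pos_11_form (h : form11) : Prop :=
  (* well defined on the quotient by +-1 *)
  (forall w, nonzero2 w -> forall j k, (j < 2)%nat -> (k < 2)%nat ->
     h (C2neg w) j k = h w j k) /\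
  (forall j k, (j < 2)%nat -> (k < 2)%nat -> smoothC_on nonzero2 (fun w => h w j k)) /\
  (* real *)
  (forall w, nonzero2 w -> hermitian (h w)) /\
  (* closed: d omega = 0 on X~ \ E (hence on X~ by continuity) *)
  (forall w, nonzero2 w -> forall j k l, (j < 2)%nat -> (k < 2)%nat -> (l < 2)%nat ->
     dW l (fun p => h p j k) w = dW j (fun p => h p l k) w /\
     dWbar l (fun p => h p j k) w = dWbar k (fun p => h p j l) w) /\
  (forall w, nonzero2 w -> posdef (h w)) /\
  extends_pos_over_E h.

Definition form_eq_at (h h' : form11) (w : C2) : Prop :=
  forall j k, (j < 2)%nat -> (k < 2)%nat -> h w j k = h' w j k.

Definition omega_hat : form11 := fun _ j k => if Nat.eqb j k then RtoC 1 else RtoC 0.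

(** Eguchi--Hanson potential and tilde omega_t = (1/4) dd^c phi_t = (i/2) d dbar phi_t,
    i.e. h_{j kbar} = d^2 phi_t / dw_j dwbar_k. *)
Definition EH_potential (t : R) (w : C2) : R :=
  let r := r_of w in
  sqrt (r ^ 4 + t ^ 4) + t ^ 2 * ln (r ^ 2 / (sqrt (r ^ 4 + t ^ 4) + t ^ 2)).
Definition omega_tilde (t : R) : form11 := fun w j k =>
  dW j (dWbar k (fun p => RtoC (EH_potential t p))) w.

(** omega /\ omega = wedge_sq_coeff omega * vol_0, where for
    omega = (i/2) sum h_{j kbar} dw^j /\ dwbar^k one has omega^2 = 2 det(h) vol_0. *)
Definition wedge_sq_coeff (h : form11) (w : C2) : R :=
  2 * Re (Cminus (Cmult (h w 0%nat 0%nat) (h w 1%nat 1%nat))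
                 (Cmult (h w 0%nat 1%nat) (h w 1%nat 0%nat))).

(* A U(2)-invariant Kähler form [i d dbar phi(|w|^2)] on [C^2 \ 0] is
   determined by the profile [A(X) = (|w|^2 phi'(|w|^2))^2], [X = |w|^4], and
   its volume form is [omega^2 = 2 A'(X) vol_0]: the Monge-Ampère quantity is
   linear in [A].  Eguchi-Hanson is [A = X + t^4] and the flat metric is
   [A = X].  Gluing them as [A = X + t^4 (1 - step ((X / t^4 - c) / (M + 1)))],
   where [step] is a smooth step and [M >= 1] the maximum of its derivative,
   keeps [A > 0] and [A' >= 1 / (M + 1)], with equality where [step'] is
   maximal; so the form is positive, its volume is bounded below by
   [2 upsilon^2 vol_0] with [upsilon^2 = 1 / (M + 1)], and the bound is attained
   on a sphere.  In the blow-up charts [(z, u)] one has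
   [X = |u|^2 (1 + |z|^2)^2], and the coefficients are smooth functions of
   [X], [A(X)], [A'(X)] with [A(0), A'(0) > 0], so the form extends positively
   across [E].  All radii scale with [t]; [R^4 = 2 M + 4]. *)

From Stdlib Require Import Reals Lra Lia.
From Coquelicot Require Import Coquelicot.
Open Scope R_scope.

Lemma is_derive_replace (f : R -> R) (x l l' : R) : is_derive f x l -> l = l' -> is_derive f x l'.
Proof. intros H ->; exact H. Qed.

Lemma Rdiv_eq_cross a b c d : b <> 0 -> d <> 0 -> a * d = c * b -> a / b = c / d.
Proof. intros Hb Hd E. field_simplify_eq; auto. lra. Qed.

Lemma is_derive_comp_R (f g : R -> R) x df dg :
  is_derive f (g x) df -> is_derive g x dg -> is_derive (fun y => f (g y)) x (dg * df).
Proof. intros Hf Hg. apply (is_derive_comp f g x df dg); auto. Qed.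

Lemma locally_Rabs (x d : R) (P : R -> Prop) :
  0 < d -> (forall y, Rabs (y - x) < d -> P y) -> locally x P.
Proof. intros Hd H. exists (mkposreal d Hd). intros y Hy. apply H, Hy. Qed.

Lemma locally_gt (a y : R) : a < y -> locally y (fun x => a < x).
Proof.
  intro Hy. apply (locally_Rabs _ (y - a)); [lra|].
  intros x Hx. apply Rabs_def2 in Hx. lra.
Qed.

Lemma is_derive_locally_const (f : R -> R) (c y d : R) :
  0 < d -> (forall x, Rabs (x - y) < d -> f x = c) -> is_derive f y 0.
Proof.
  intros Hd Hf. apply is_derive_ext_loc with (fun _ => c).
  - apply (locally_Rabs _ d); auto. intros x Hx. symmetry. auto.
  - apply (is_derive_const c y).
Qed.

Lemma exp_mult_INR (n : nat) (v : R) : exp (INR n * v) = exp v ^ n.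
Proof.
  induction n as [|n IH].
  - rewrite Rmult_0_l. apply exp_0.
  - rewrite S_INR, Rmult_plus_distr_r, Rmult_1_l, exp_plus, IH. simpl. ring.
Qed.

Lemma pow_div_le_exp (N : nat) (u : R) : (0 < N)%nat -> 0 <= u -> (u / INR N) ^ N <= exp u.
Proof.
  intros HN Hu.
  assert (HN' : 0 < INR N) by (apply lt_0_INR; lia).
  replace u with (INR N * (u / INR N)) at 2 by (field; lra).
  rewrite exp_mult_INR. apply pow_incr. split.
  - apply Rdiv_le_0_compat; lra.
  - generalize (exp_ineq1_le (u / INR N)). lra.
Qed.

(* All derivatives of [expinv n] vanish at [0]; this is what makes [step]
   smooth. *)
Definition expinv (n : nat) (y : R) : R :=
  if Rlt_dec 0 y then exp (- / y) / y ^ n else 0.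

Lemma expinv_ge0 n y : 0 <= expinv n y.
Proof.
  unfold expinv. destruct Rlt_dec; [|lra].
  apply Rdiv_le_0_compat; [left; apply exp_pos | apply pow_lt; lra].
Qed.

Lemma expinv_gt0 n y : 0 < y -> 0 < expinv n y.
Proof.
  intro. unfold expinv. destruct Rlt_dec; [|lra].
  apply Rdiv_lt_0_compat; [apply exp_pos | apply pow_lt; lra].
Qed.

Lemma expinv_le0 n y : y <= 0 -> expinv n y = 0.
Proof. intro. unfold expinv. destruct Rlt_dec; [lra | reflexivity]. Qed.

Lemma expinv_le_linear (m : nat) (y : R) : 0 < y ->
  expinv m y <= INR (S m) ^ S m * y.
Proof.
  intro Hy. unfold expinv. destruct Rlt_dec; [|lra].
  set (u := / y). assert (Hu : 0 < u) by (apply Rinv_0_lt_compat; lra).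
  replace y with (/ u) by (unfold u; apply Rinv_inv).
  set (N := S m). assert (HN : 0 < INR N) by (apply lt_0_INR; unfold N; lia).
  assert (He : (u / INR N) ^ N <= exp u) by (apply pow_div_le_exp; unfold N; lia || lra).
  assert (Hp : 0 < (u / INR N) ^ N) by (apply pow_lt, Rdiv_lt_0_compat; lra).
  rewrite exp_Ropp, pow_inv.
  replace (/ exp u / / u ^ m) with (u ^ m / exp u)
    by (field; split; [apply pow_nonzero; lra | apply Rgt_not_eq, exp_pos]).
  apply Rle_trans with (u ^ m / (u / INR N) ^ N).
  - apply Rmult_le_compat_l; [apply pow_le; lra|]. apply Rinv_le_contravar; lra.
  - right. unfold Rdiv at 2. rewrite Rpow_mult_distr, pow_inv.
    change (u ^ N) with (u * u ^ m).
    field. split; [lra|]. split; apply pow_nonzero; lra.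
Qed.

(* Flatness at [0]: the bound [expinv (S n) h <= C h] squeezes the difference
   quotient [expinv n h / h]. *)
Lemma is_derive_expinv_0 n : is_derive (expinv n) 0 0.
Proof.
  apply is_derive_Reals. intros eps Heps.
  set (K := INR (S (S n)) ^ S (S n)).
  assert (HK : 0 < K) by (apply pow_lt, lt_0_INR; lia).
  assert (Hd : 0 < eps / K) by (apply Rdiv_lt_0_compat; lra).
  exists (mkposreal _ Hd). intros h Hh Hab. simpl in Hab.
  rewrite Rplus_0_l, (expinv_le0 n 0), Rminus_0_r, Rminus_0_r by lra.
  destruct (Rlt_dec 0 h) as [Hp|Hp].
  - assert (E : expinv n h / h = expinv (S n) h).
    { unfold expinv. destruct Rlt_dec; [|lra]. simpl. field.
      split; [apply pow_nonzero|]; lra. }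
    rewrite E, Rabs_pos_eq by apply expinv_ge0. rewrite Rabs_pos_eq in Hab by lra.
    apply Rle_lt_trans with (K * h); [apply expinv_le_linear; lra|].
    apply Rmult_lt_reg_l with (/ K); [apply Rinv_0_lt_compat; lra|].
    replace (/ K * (K * h)) with h by (field; lra).
    replace (/ K * eps) with (eps / K) by (unfold Rdiv; ring). exact Hab.
  - rewrite expinv_le0 by lra. unfold Rdiv. rewrite Rmult_0_l, Rabs_R0. lra.
Qed.

Lemma is_derive_expinv (n : nat) (y : R) :
  is_derive (expinv n) y (expinv (n + 2) y - INR n * expinv (S n) y).
Proof.
  destruct (Rlt_dec 0 y) as [Hy|Hy].
  - apply is_derive_ext_loc with (f := fun x => exp (- / x) * (/ x) ^ n).
    { apply (filter_imp (fun x => 0 < x)); [|apply locally_gt; exact Hy].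
      intros x Hx. unfold expinv. destruct Rlt_dec; [|lra]. rewrite pow_inv. reflexivity. }
    auto_derive; [lra|].
    unfold expinv. destruct Rlt_dec; [|lra].
    replace (n + 2)%nat with (S (S n)) by lia.
    rewrite !pow_inv. destruct n as [|n]; simpl pred; simpl; field;
      repeat split; try lra; apply pow_nonzero; lra.
  - apply Rnot_lt_le in Hy. rewrite !expinv_le0 by lra. rewrite Rmult_0_r, Rminus_0_r.
    destruct Hy as [Hy | ->]; [|apply is_derive_expinv_0].
    apply (is_derive_locally_const _ 0 _ (- y)); [lra|].
    intros x Hx. apply Rabs_def2 in Hx. apply expinv_le0. lra.
Qed.

(* Real functions smooth on [(a, +oo)], generated syntactically so that the
   class is visibly closed under differentiation. *)
Inductive smooth_above : R -> (R -> R) -> Prop :=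
| sa_const a c : smooth_above a (fun _ => c)
| sa_id a : smooth_above a (fun y => y)
| sa_expinv a n al be : smooth_above a (fun y => expinv n (al * y + be))
| sa_plus a f g : smooth_above a f -> smooth_above a g -> smooth_above a (fun y => f y + g y)
| sa_mult a f g : smooth_above a f -> smooth_above a g -> smooth_above a (fun y => f y * g y)
| sa_comp a a' g h : smooth_above a' g -> smooth_above a h -> (forall y, a < y -> a' < h y) ->
    smooth_above a (fun y => g (h y))
| sa_inv a h : smooth_above a h -> (forall y, a < y -> 0 < h y) -> smooth_above a (fun y => / h y)
| sa_sqrt a h : smooth_above a h -> (forall y, a < y -> 0 < h y) ->
    smooth_above a (fun y => sqrt (h y))
| sa_ext a f g : smooth_above a f -> (forall y, a < y -> f y = g y) -> smooth_above a g.

Lemma smooth_above_derive a f : smooth_above a f ->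
  exists f', smooth_above a f' /\ forall y, a < y -> is_derive f y (f' y).
Proof.
  induction 1 as [a c|a|a n al be|a f g _ [f' [Sf Df]] _ [g' [Sg Dg]]
    |a f g Hf [f' [Sf Df]] Hg [g' [Sg Dg]]|a a' g h Hg [g' [Sg Dg]] Hh [h' [Sh Dh]] Hgh
    |a h Hh [h' [Sh Dh]] Hpos|a h Hh [h' [Sh Dh]] Hpos|a f g _ [f' [Sf Df]] Efg].
  - exists (fun _ => 0). split; [constructor|]. intros y _. apply (is_derive_const c y).
  - exists (fun _ => 1). split; [constructor|]. intros y _. apply (is_derive_id y).
  - exists (fun y => al * (expinv (n + 2) (al * y + be) + (- INR n) * expinv (S n) (al * y + be))).
    split; [repeat constructor|].
    intros y _.
    assert (Haff : is_derive (fun y => al * y + be) y al) by (auto_derive; [exact I | ring]).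
    eapply is_derive_replace.
    + apply (is_derive_comp_R (expinv n) (fun y => al * y + be)); [apply is_derive_expinv | exact Haff].
    + ring.
  - exists (fun y => f' y + g' y). split; [constructor; auto|].
    intros y Hy. apply (is_derive_plus f g); auto.
  - exists (fun y => f' y * g y + f y * g' y). split; [apply sa_plus; apply sa_mult; auto|].
    intros y Hy. apply Derive.is_derive_mult; auto.
  - exists (fun y => h' y * g' (h y)). split; [apply sa_mult; [exact Sh | apply sa_comp with a'; auto]|].
    intros y Hy. apply is_derive_comp_R; auto.
  - exists (fun y => (- 1) * h' y * (/ h y * / h y)). split.
    + apply sa_mult; [apply sa_mult; [constructor | exact Sh]|]. apply sa_mult; apply sa_inv; auto.
    + intros y Hy. specialize (Hpos y Hy). eapply is_derive_replace.
      * apply is_derive_inv; [auto | lra].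
      * field. lra.
  - exists (fun y => h' y * (/ 2 * / sqrt (h y))). split.
    + apply sa_mult; auto. apply sa_mult; [constructor|].
      apply sa_inv; [apply sa_sqrt; auto|]. intros; apply sqrt_lt_R0; auto.
    + intros y Hy. specialize (Hpos y Hy). assert (0 < sqrt (h y)) by (apply sqrt_lt_R0; auto).
      eapply is_derive_replace; [apply is_derive_sqrt; auto|]. field. lra.
  - exists f'. split; auto. intros y Hy. apply is_derive_ext_loc with f; auto.
    apply (filter_imp (fun x => a < x)); [auto | apply locally_gt; exact Hy].
Qed.

Lemma smooth_above_continuous a f y : smooth_above a f -> a < y -> continuous f y.
Proof.
  intros H Hy. destruct (smooth_above_derive a f H) as [f' [_ D]].
  apply (ex_derive_continuous (K := R_AbsRing) (V := R_NormedModule) f y). exists (f' y). auto.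
Qed.

Definition step (y : R) : R := expinv 0 y / (expinv 0 y + expinv 0 (1 - y)).

Lemma step_denominator_pos y : 0 < expinv 0 y + expinv 0 (1 - y).
Proof.
  destruct (Rlt_dec 0 y).
  - generalize (expinv_gt0 0 y r) (expinv_ge0 0 (1 - y)). lra.
  - generalize (expinv_gt0 0 (1 - y) ltac:(lra)) (expinv_ge0 0 y). lra.
Qed.

Lemma smooth_above_step a : smooth_above a step.
Proof.
  apply sa_ext with (fun y => expinv 0 (1 * y + 0) * / (expinv 0 (1 * y + 0) + expinv 0 ((-1) * y + 1))).
  - apply sa_mult; [constructor|]. apply sa_inv; [apply sa_plus; constructor|].
    intros y _. replace (1 * y + 0) with y by ring. replace (-1 * y + 1) with (1 - y) by ring.
    apply step_denominator_pos.
  - intros y _. unfold step. replace (1 * y + 0) with y by ring.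
    replace (-1 * y + 1) with (1 - y) by ring. reflexivity.
Qed.

Lemma step_le0 y : y <= 0 -> step y = 0.
Proof. intro. unfold step. rewrite (expinv_le0 0 y) by auto. unfold Rdiv. ring. Qed.

Lemma step_ge1 y : 1 <= y -> step y = 1.
Proof.
  intro. unfold step. rewrite (expinv_le0 0 (1 - y)), Rplus_0_r by lra.
  field. generalize (expinv_gt0 0 y ltac:(lra)). lra.
Qed.

Lemma step_bounds y : 0 <= step y <= 1.
Proof.
  unfold step. generalize (step_denominator_pos y) (expinv_ge0 0 y) (expinv_ge0 0 (1 - y)).
  intros. split.
  - apply Rdiv_le_0_compat; lra.
  - apply Rmult_le_reg_r with (expinv 0 y + expinv 0 (1 - y)); [lra|].
    unfold Rdiv. rewrite Rmult_assoc, Rinv_l by lra. lra.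
Qed.

(* [step] rises by [1] over [[0, 1]], so by the mean value theorem its
   derivative attains a maximum [M >= 1] there. *)
Lemma step_derivative : exists (step' : R -> R) (M ym : R),
  smooth_above (-1) step' /\ (forall y, -1 < y -> is_derive step y (step' y)) /\
  (forall y, -1 < y -> y < 0 -> step' y = 0) /\ (forall y, 1 < y -> step' y = 0) /\
  (forall y, -1 < y -> step' y <= M) /\ 0 <= ym <= 1 /\ step' ym = M /\ 1 <= M.
Proof.
  destruct (smooth_above_derive (-1) step (smooth_above_step (-1))) as [S1 [L1 D1]].
  assert (Z1 : forall y, -1 < y -> y < 0 -> S1 y = 0).
  { intros y H1 H2. transitivity (Derive step y); [symmetry; apply is_derive_unique, D1; lra|].
    apply is_derive_unique, (is_derive_locally_const _ 0 _ (- y)); [lra|].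
    intros x Hx. apply Rabs_def2 in Hx. apply step_le0. lra. }
  assert (Z2 : forall y, 1 < y -> S1 y = 0).
  { intros y H1. transitivity (Derive step y); [symmetry; apply is_derive_unique, D1; lra|].
    apply is_derive_unique, (is_derive_locally_const _ 1 _ (y - 1)); [lra|].
    intros x Hx. apply Rabs_def2 in Hx. apply step_ge1. lra. }
  assert (C1 : forall c, -1 < c -> continuity_pt S1 c).
  { intros c Hc. apply continuity_pt_filterlim. apply (smooth_above_continuous (-1)); auto. }
  assert (CS : forall c, -1 < c -> continuity_pt step c).
  { intros c Hc. apply continuity_pt_filterlim. apply (smooth_above_continuous (-1)); auto.
    apply smooth_above_step. }
  destruct (continuity_ab_maj S1 0 1 ltac:(lra) ltac:(intros; apply C1; lra)) as [ym [Hmax Hym]].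
  destruct (MVT_gen step 0 1 S1) as [c0 [Hc0 Hmvt]].
  { intros x Hx. apply D1. rewrite Rmin_left in Hx by lra. lra. }
  { intros x Hx. apply CS. rewrite Rmin_left in Hx by lra. lra. }
  rewrite Rmin_left in Hc0 by lra. rewrite Rmax_right in Hc0 by lra.
  rewrite step_ge1, step_le0 in Hmvt by lra.
  assert (HM : 1 <= S1 ym) by (generalize (Hmax c0 Hc0); nra).
  exists S1, (S1 ym), ym.
  do 4 (split; [assumption|]). split; [|tauto].
  intros x Hx. destruct (Rlt_dec x 0); [rewrite Z1 by auto; lra|].
  destruct (Rlt_dec 1 x); [rewrite Z2 by auto; lra|]. apply Hmax. lra.
Qed.

Definition coord (i : nat) (w : C2) : R :=
  match i with
  | O => fst (fst w) | 1%nat => snd (fst w) | 2%nat => fst (snd w) | _ => snd (snd w)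
  end.

Definition sqnorm (w : C2) : R :=
  coord 0 w * coord 0 w + coord 1 w * coord 1 w + coord 2 w * coord 2 w + coord 3 w * coord 3 w.

Lemma sqnorm_ge0 w : 0 <= sqnorm w.
Proof. unfold sqnorm. nra. Qed.

Lemma r_of_sqnorm w : r_of w = sqrt (sqnorm w).
Proof.
  destruct w as [[x1 y1] [x2 y2]]. unfold r_of, Cmod. cbn [fst snd].
  rewrite !pow2_sqrt by (apply Rplus_le_le_0_compat; apply pow2_ge_0).
  f_equal. unfold sqnorm, coord; simpl. ring.
Qed.

Lemma r_of_sq w : r_of w ^ 2 = sqnorm w.
Proof. rewrite r_of_sqnorm. apply pow2_sqrt, sqnorm_ge0. Qed.

Lemma nonzero2_sqnorm w : nonzero2 w <-> 0 < sqnorm w.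
Proof.
  destruct w as [[x1 y1] [x2 y2]]. unfold nonzero2, zero2, sqnorm, coord, RtoC; simpl. split.
  - intro H. destruct (Req_dec x1 0), (Req_dec y1 0), (Req_dec x2 0), (Req_dec y2 0);
      try (subst; exfalso; apply H; reflexivity); nra.
  - intros H E. inversion E. subst. lra.
Qed.

Lemma coord_dist i w w' : Rabs (coord i w' - coord i w) <= dist2 w' w.
Proof.
  unfold dist2. rewrite r_of_sqnorm, <- sqrt_Rsqr_abs. apply sqrt_le_1_alt. unfold Rsqr.
  destruct w as [[x1 y1] [x2 y2]], w' as [[a1 b1] [a2 b2]].
  unfold sqnorm, coord, Cminus, Cplus, Copp; simpl.
  generalize (Rle_0_sqr (a1 + - x1)) (Rle_0_sqr (b1 + - y1)) (Rle_0_sqr (a2 + - x2))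
    (Rle_0_sqr (b2 + - y2)); unfold Rsqr, Rminus.
  destruct i as [|[|[|[|i]]]]; simpl; lra.
Qed.

Lemma shift_zero k w : shift k 0 w = w.
Proof.
  destruct w as [[x1 y1] [x2 y2]]. destruct k as [|[|[|]]]; simpl; rewrite Rplus_0_r; reflexivity.
Qed.

(* [shift k] with [k >= 3] moves [y2], which is also the coordinate [coord k]
   reads: no bound on [k] is needed here. *)
Lemma sqnorm_shift k s w : sqnorm (shift k s w) = sqnorm w + 2 * s * coord k w + s * s.
Proof.
  destruct w as [[x1 y1] [x2 y2]]. destruct k as [|[|[|[|]]]]; unfold sqnorm, coord; simpl; ring.
Qed.

Lemma is_derive_sqnorm_shift i w : is_derive (fun s => sqnorm (shift i s w)) 0 (2 * coord i w).
Proof.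
  apply is_derive_ext with (fun s => sqnorm w + 2 * s * coord i w + s * s).
  - intro s. symmetry. apply sqnorm_shift.
  - auto_derive; [exact I | ring].
Qed.

Definition dcoord (k i : nat) : R := if Nat.eqb (Nat.min i 3) k then 1 else 0.

Lemma is_derive_coord_shift k i w : (k < 4)%nat ->
  is_derive (fun s => coord i (shift k s w)) 0 (dcoord k i).
Proof.
  intro Hk. destruct w as [[x1 y1] [x2 y2]]. unfold dcoord.
  destruct k as [|[|[|[|k]]]]; try lia; destruct i as [|[|[|[|i]]]]; cbn;
    auto_derive; try exact I; ring.
Qed.

Inductive smooth_expr (V : C2 -> Prop) : (C2 -> R) -> Prop :=
| se_coord i : smooth_expr V (coord i)
| se_const c : smooth_expr V (fun _ => c)
| se_plus f g : smooth_expr V f -> smooth_expr V g -> smooth_expr V (fun w => f w + g w)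
| se_mult f g : smooth_expr V f -> smooth_expr V g -> smooth_expr V (fun w => f w * g w)
| se_comp a g q : smooth_above a g -> smooth_expr V q -> (forall w, V w -> a < q w) ->
    smooth_expr V (fun w => g (q w)).

Ltac smooth_expr_auto :=
  repeat (first [assumption | apply se_plus | apply se_mult | apply se_const | apply se_coord]).

Lemma smooth_expr_derive V f : smooth_expr V f -> forall k, (k < 4)%nat ->
  exists f', smooth_expr V f' /\ forall w, V w -> is_derive (fun s => f (shift k s w)) 0 (f' w).
Proof.
  induction 1 as [i|c|f g _ IHf _ IHg|f g Hf IHf Hg IHg|a g q Hg Hq IHq Haq]; intros k Hk.
  - exists (fun _ => dcoord k i). split; [constructor|]. intros. apply is_derive_coord_shift; auto.
  - exists (fun _ => 0). split; [constructor|]. intros. apply (is_derive_const c 0).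
  - destruct (IHf k Hk) as [f' [Sf Df]], (IHg k Hk) as [g' [Sg Dg]].
    exists (fun w => f' w + g' w). split; [constructor; auto|].
    intros w Hw. apply (is_derive_plus (fun s => f (shift k s w)) (fun s => g (shift k s w))); auto.
  - destruct (IHf k Hk) as [f' [Sf Df]], (IHg k Hk) as [g' [Sg Dg]].
    exists (fun w => f' w * g w + f w * g' w). split; [apply se_plus; apply se_mult; auto|].
    intros w Hw. eapply is_derive_replace.
    + apply (Derive.is_derive_mult (fun s => f (shift k s w)) (fun s => g (shift k s w))); auto.
    + rewrite !shift_zero. reflexivity.
  - destruct (IHq k Hk) as [q' [Sq Dq]]. destruct (smooth_above_derive a g Hg) as [g' [Sg Dg]].
    exists (fun w => q' w * g' (q w)). split; [apply se_mult; auto; apply se_comp with a; auto|].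
    intros w Hw. apply (is_derive_comp_R g (fun s => q (shift k s w))); auto.
    rewrite shift_zero. auto.
Qed.

Definition cont_within (V : C2 -> Prop) (f : C2 -> R) (w : C2) : Prop :=
  forall eps, 0 < eps -> exists d, 0 < d /\
    forall w', V w' -> dist2 w' w < d -> Rabs (f w' - f w) < eps.

Lemma Rabs_mult_sub_lt (a a0 b b0 eps : R) : 0 < eps ->
  Rabs (a - a0) < Rmin 1 (eps / (2 + Rabs a0 + Rabs b0)) ->
  Rabs (b - b0) < Rmin 1 (eps / (2 + Rabs a0 + Rabs b0)) ->
  Rabs (a * b - a0 * b0) < eps.
Proof.
  intros He Ha Hb. set (K := 2 + Rabs a0 + Rabs b0) in *.
  assert (HK : 0 < K) by (unfold K; generalize (Rabs_pos a0) (Rabs_pos b0); lra).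
  set (m := Rmin 1 (eps / K)) in *.
  assert (Hm1 : m <= 1) by apply Rmin_l.
  assert (HmK : m * K <= eps).
  { apply Rle_trans with (eps / K * K); [apply Rmult_le_compat_r; [lra | apply Rmin_r]|].
    right. field. lra. }
  replace (a * b - a0 * b0) with ((a - a0) * (b - b0) + a0 * (b - b0) + b0 * (a - a0)) by ring.
  eapply Rle_lt_trans; [apply Rabs_triang|]. eapply Rle_lt_trans; [apply Rplus_le_compat_r, Rabs_triang|].
  rewrite !Rabs_mult.
  generalize (Rabs_pos (a - a0)) (Rabs_pos (b - b0)) (Rabs_pos a0) (Rabs_pos b0). intros.
  assert (Rabs (a - a0) * Rabs (b - b0) <= m * 1) by (apply Rmult_le_compat; lra).
  assert (Rabs a0 * Rabs (b - b0) <= Rabs a0 * m) by (apply Rmult_le_compat_l; lra).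
  assert (Rabs b0 * Rabs (a - a0) <= Rabs b0 * m) by (apply Rmult_le_compat_l; lra).
  unfold K in *. nra.
Qed.

Lemma smooth_expr_continuous V f : smooth_expr V f -> forall w, V w -> cont_within V f w.
Proof.
  induction 1 as [i|c|f g _ IHf _ IHg|f g _ IHf _ IHg|a g q Hg _ IHq Haq]; intros w Hw eps Heps.
  - exists eps. split; auto. intros. eapply Rle_lt_trans; [apply coord_dist | auto].
  - exists 1. split; [lra|]. intros. rewrite Rminus_diag, Rabs_R0. auto.
  - destruct (IHf w Hw (eps / 2)) as [d1 [Hd1 H1]]; [lra|].
    destruct (IHg w Hw (eps / 2)) as [d2 [Hd2 H2]]; [lra|].
    exists (Rmin d1 d2). split; [apply Rmin_pos; auto|]. intros w' Hw' Hd.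
    specialize (H1 w' Hw' (Rlt_le_trans _ _ _ Hd (Rmin_l _ _))).
    specialize (H2 w' Hw' (Rlt_le_trans _ _ _ Hd (Rmin_r _ _))).
    replace (f w' + g w' - (f w + g w)) with ((f w' - f w) + (g w' - g w)) by ring.
    eapply Rle_lt_trans; [apply Rabs_triang | lra].
  - set (e := Rmin 1 (eps / (2 + Rabs (f w) + Rabs (g w)))).
    assert (He : 0 < e).
    { apply Rmin_pos; [lra|]. apply Rdiv_lt_0_compat; auto.
      generalize (Rabs_pos (f w)) (Rabs_pos (g w)); lra. }
    destruct (IHf w Hw e He) as [d1 [Hd1 H1]], (IHg w Hw e He) as [d2 [Hd2 H2]].
    exists (Rmin d1 d2). split; [apply Rmin_pos; auto|]. intros w' Hw' Hd.
    apply Rabs_mult_sub_lt; auto.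
    + apply H1; auto. eapply Rlt_le_trans; [apply Hd | apply Rmin_l].
    + apply H2; auto. eapply Rlt_le_trans; [apply Hd | apply Rmin_r].
  - assert (Hc := smooth_above_continuous a g (q w) Hg (Haq w Hw)).
    destruct (proj1 (filterlim_locally (F := locally (q w)) g (g (q w))) Hc (mkposreal eps Heps))
      as [d1 Hd1].
    destruct (IHq w Hw d1 (cond_pos d1)) as [d2 [Hd2 Hq]].
    exists d2. split; auto. intros w' Hw' Hd. apply (Hd1 (q w')), Hq; auto.
Qed.

(* Openness of [V] along each coordinate line, which is all [Ck] ever uses. *)
Definition shift_open (V : C2 -> Prop) : Prop :=
  forall w, V w -> forall k, locally 0 (fun s => V (shift k s w)).

Lemma Ck_ext V : shift_open V -> forall n f g, (forall w, V w -> f w = g w) ->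
  Ck n V f -> Ck n V g.
Proof.
  intros HV n. induction n as [|n IH]; intros f g E C.
  - intros w Hw eps He. destruct (C w Hw eps He) as [d [Hd Hc]].
    exists d. split; auto. intros w' Hw' Hd'. rewrite <- !E by auto. auto.
  - destruct C as [C0 C1]. split.
    + intros w Hw eps He. destruct (C0 w Hw eps He) as [d [Hd Hc]].
      exists d. split; auto. intros w' Hw' Hd'. rewrite <- !E by auto. auto.
    + intros k Hk. destruct (C1 k Hk) as [D1 D2]. split.
      * intros w Hw. apply ex_derive_ext_loc with (fun s => f (shift k s w)); [|apply D1; auto].
        apply (filter_imp _ _ (fun s => E _)), HV; auto.
      * apply IH with (rpartial k f); auto. intros w Hw. apply Derive_ext_loc.
        apply (filter_imp _ _ (fun s => E _)), HV; auto.
Qed.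

Lemma smooth_expr_smooth V f : shift_open V -> smooth_expr V f -> smooth_on V f.
Proof.
  intros HV Hf n. revert f Hf. induction n as [|n IH]; intros f Hf.
  - intros w Hw. apply smooth_expr_continuous; auto.
  - split; [intros w Hw; apply smooth_expr_continuous; auto|].
    intros k Hk. destruct (smooth_expr_derive V f Hf k Hk) as [f' [Sf Df]]. split.
    + intros w Hw. exists (f' w). auto.
    + apply Ck_ext with f'; auto. intros w Hw. symmetry. apply is_derive_unique. auto.
Qed.

Lemma smooth_on_of_expr V f f' : shift_open V -> (forall w, V w -> f' w = f w) ->
  smooth_expr V f' -> smooth_on V f.
Proof. intros HV E Hf' n. apply Ck_ext with f'; auto. apply smooth_expr_smooth; auto. Qed.

Lemma shift_open_True : shift_open (fun _ => True).
Proof. intros w _ k. apply (locally_Rabs _ 1); [lra | auto]. Qed.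

Lemma shift_open_nonzero : shift_open nonzero2.
Proof.
  intros w Hw k. apply nonzero2_sqnorm in Hw. set (c := Rabs (coord k w)).
  assert (0 <= c) by apply Rabs_pos.
  apply (locally_Rabs _ (sqnorm w / (2 * (c + 1)))); [apply Rdiv_lt_0_compat; lra|].
  intros y Hy. apply nonzero2_sqnorm. rewrite sqnorm_shift. rewrite Rminus_0_r in Hy.
  assert (Rabs (2 * y * coord k w) <= 2 * Rabs y * c)
    by (rewrite !Rabs_mult, (Rabs_right 2) by lra; unfold c; lra).
  assert (2 * Rabs y * c <= sqnorm w * c / (c + 1)).
  { apply Rle_trans with (2 * (sqnorm w / (2 * (c + 1))) * c); [apply Rmult_le_compat_r; lra|].
    right; field; lra. }
  assert (sqnorm w * c / (c + 1) < sqnorm w).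
  { apply Rmult_lt_reg_r with (c + 1); [lra|]. unfold Rdiv. rewrite Rmult_assoc, Rinv_l by lra. nra. }
  assert (- (2 * y * coord k w) <= Rabs (2 * y * coord k w)) by (rewrite <- Rabs_Ropp; apply RRle_abs).
  nra.
Qed.

Lemma smooth_expr_open (f : C2 -> R) (c : R) :
  smooth_expr (fun _ => True) f -> is_open2 (fun w => c < f w).
Proof.
  intros Hf w Hw. destruct (smooth_expr_continuous _ f Hf w I (f w - c)) as [d [Hd H]]; [lra|].
  exists d. split; auto. intros w' Hw'. specialize (H w' I Hw'). apply Rabs_def2 in H. lra.
Qed.

Definition wcoord (j : nat) (w : C2) : C := match j with O => fst w | _ => snd w end.

(* [i d dbar phi(|w|^2)] has coefficients [phi' delta_jk + phi'' conj(w_j) w_k];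
   [q1], [q2] stand for [phi'], [phi''] as functions of [|w|^2]. *)
Definition radial_form (q1 q2 : R -> R) : form11 := fun w j k =>
  Cplus (if Nat.eqb j k then RtoC (q1 (sqnorm w)) else RtoC 0)
        (Cmult (RtoC (q2 (sqnorm w))) (Cmult (Cconj (wcoord j w)) (wcoord k w))).

Definition kron (j k : nat) : R := if Nat.eqb j k then 1 else 0.
Definition re_prod (j k : nat) (w : C2) : R :=
  coord (2*j) w * coord (2*k) w + coord (2*j+1) w * coord (2*k+1) w.
Definition im_prod (j k : nat) (w : C2) : R :=
  coord (2*j) w * coord (2*k+1) w - coord (2*j+1) w * coord (2*k) w.

Lemma radial_form_Re q1 q2 w j k : (j < 2)%nat -> (k < 2)%nat ->
  Re (radial_form q1 q2 w j k) = kron j k * q1 (sqnorm w) + q2 (sqnorm w) * re_prod j k w.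
Proof.
  intros. destruct w as [[x1 y1] [x2 y2]].
  destruct j as [|[|]], k as [|[|]]; try lia;
  unfold radial_form, re_prod, kron, wcoord, coord, Cplus, Cmult, Cconj, RtoC; simpl; ring.
Qed.

Lemma radial_form_Im q1 q2 w j k : (j < 2)%nat -> (k < 2)%nat ->
  Im (radial_form q1 q2 w j k) = 0 * q1 (sqnorm w) + q2 (sqnorm w) * im_prod j k w.
Proof.
  intros. destruct w as [[x1 y1] [x2 y2]].
  destruct j as [|[|]], k as [|[|]]; try lia;
  unfold radial_form, im_prod, wcoord, coord, Cplus, Cmult, Cconj, RtoC; simpl; ring.
Qed.

Lemma radial_form_smooth q1 q2 : smooth_above 0 q1 -> smooth_above 0 q2 ->
  forall j k, (j < 2)%nat -> (k < 2)%nat -> smoothC_on nonzero2 (fun w => radial_form q1 q2 w j k).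
Proof.
  intros H1 H2 j k Hj Hk.
  assert (Hq : forall q, smooth_above 0 q -> smooth_expr nonzero2 (fun w => q (sqnorm w)))
    by (intros q Hq; apply se_comp with 0; [exact Hq | unfold sqnorm; smooth_expr_auto |
        intros w Hw; apply nonzero2_sqnorm, Hw]).
  assert (Hq1 := Hq q1 H1). assert (Hq2 := Hq q2 H2).
  split.
  - apply smooth_on_of_expr with (fun w => kron j k * q1 (sqnorm w) + q2 (sqnorm w) * re_prod j k w);
      [exact shift_open_nonzero | intros; symmetry; apply radial_form_Re; auto |].
    unfold re_prod; smooth_expr_auto.
  - apply smooth_on_of_expr with (fun w => 0 * q1 (sqnorm w) + q2 (sqnorm w) *
        (coord (2*j) w * coord (2*k+1) w + (-1) * (coord (2*j+1) w * coord (2*k) w)));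
      [exact shift_open_nonzero | intros; rewrite radial_form_Im; auto; unfold im_prod; ring |].
    smooth_expr_auto.
Qed.

Lemma is_derive_radial_shift (a : R) (g1 g1' g2 g2' : R -> R) (Q : C2 -> R) dQ i w :
  is_derive g1 (sqnorm w) (g1' (sqnorm w)) -> is_derive g2 (sqnorm w) (g2' (sqnorm w)) ->
  is_derive (fun s => Q (shift i s w)) 0 dQ ->
  is_derive (fun s => a * g1 (sqnorm (shift i s w)) + g2 (sqnorm (shift i s w)) * Q (shift i s w)) 0
    (a * (2 * coord i w * g1' (sqnorm w))
     + (2 * coord i w * g2' (sqnorm w) * Q w + g2 (sqnorm w) * dQ)).
Proof.
  intros H1 H2 HQ.
  assert (Hg : forall g g', is_derive g (sqnorm w) (g' (sqnorm w)) ->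
    is_derive (fun s => g (sqnorm (shift i s w))) 0 (2 * coord i w * g' (sqnorm w))).
  { intros g g' Hg. apply (is_derive_comp_R g (fun s => sqnorm (shift i s w))).
    - rewrite shift_zero. exact Hg.
    - apply is_derive_sqnorm_shift. }
  eapply is_derive_replace.
  - apply (is_derive_plus (fun s => a * g1 (sqnorm (shift i s w)))
                          (fun s => g2 (sqnorm (shift i s w)) * Q (shift i s w))).
    + apply is_derive_scal, Hg, H1.
    + apply (Derive.is_derive_mult (fun s => g2 (sqnorm (shift i s w)))); [apply Hg, H2 | exact HQ].
  - rewrite !shift_zero. reflexivity.
Qed.

Definition d_re_prod (i j k : nat) (w : C2) : R :=
  dcoord i (2*j) * coord (2*k) w + coord (2*j) w * dcoord i (2*k)
  + (dcoord i (2*j+1) * coord (2*k+1) w + coord (2*j+1) w * dcoord i (2*k+1)).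
Definition d_im_prod (i j k : nat) (w : C2) : R :=
  dcoord i (2*j) * coord (2*k+1) w + coord (2*j) w * dcoord i (2*k+1)
  - (dcoord i (2*j+1) * coord (2*k) w + coord (2*j+1) w * dcoord i (2*k)).

Lemma is_derive_coord_prod_shift a b i w : (i < 4)%nat ->
  is_derive (fun s => coord a (shift i s w) * coord b (shift i s w)) 0
    (dcoord i a * coord b w + coord a w * dcoord i b).
Proof.
  intros. eapply is_derive_replace.
  - apply (Derive.is_derive_mult (fun s => coord a (shift i s w)) (fun s => coord b (shift i s w)));
      apply is_derive_coord_shift; auto.
  - rewrite shift_zero. reflexivity.
Qed.

Lemma is_derive_re_prod_shift i j k w : (i < 4)%nat ->
  is_derive (fun s => re_prod j k (shift i s w)) 0 (d_re_prod i j k w).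
Proof.
  intros. unfold re_prod, d_re_prod.
  apply (is_derive_plus (fun s => coord (2*j) (shift i s w) * coord (2*k) (shift i s w))
    (fun s => coord (2*j+1) (shift i s w) * coord (2*k+1) (shift i s w)));
  apply is_derive_coord_prod_shift; auto.
Qed.

Lemma is_derive_im_prod_shift i j k w : (i < 4)%nat ->
  is_derive (fun s => im_prod j k (shift i s w)) 0 (d_im_prod i j k w).
Proof.
  intros. unfold im_prod, d_im_prod.
  apply (is_derive_minus (fun s => coord (2*j) (shift i s w) * coord (2*k+1) (shift i s w))
    (fun s => coord (2*j+1) (shift i s w) * coord (2*k) (shift i s w)));
  apply is_derive_coord_prod_shift; auto.
Qed.

Section RadialClosed.
Variables (q1 q2 q3 : R -> R).
Hypothesis Hq1 : forall s, 0 < s -> is_derive q1 s (q2 s).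
Hypothesis Hq2 : forall s, 0 < s -> is_derive q2 s (q3 s).

Lemma rpartial_radial_form_Re i j k w : (i < 4)%nat -> (j < 2)%nat -> (k < 2)%nat -> 0 < sqnorm w ->
  rpartial i (fun p => Re (radial_form q1 q2 p j k)) w =
  kron j k * (2 * coord i w * q2 (sqnorm w))
  + (2 * coord i w * q3 (sqnorm w) * re_prod j k w + q2 (sqnorm w) * d_re_prod i j k w).
Proof.
  intros. apply is_derive_unique.
  eapply is_derive_ext; [intro s; symmetry; apply radial_form_Re; auto|].
  apply is_derive_radial_shift; auto. apply is_derive_re_prod_shift; auto.
Qed.

Lemma rpartial_radial_form_Im i j k w : (i < 4)%nat -> (j < 2)%nat -> (k < 2)%nat -> 0 < sqnorm w ->
  rpartial i (fun p => Im (radial_form q1 q2 p j k)) w =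
  0 * (2 * coord i w * q2 (sqnorm w))
  + (2 * coord i w * q3 (sqnorm w) * im_prod j k w + q2 (sqnorm w) * d_im_prod i j k w).
Proof.
  intros. apply is_derive_unique.
  eapply is_derive_ext; [intro s; symmetry; apply radial_form_Im; auto|].
  apply is_derive_radial_shift; auto. apply is_derive_im_prod_shift; auto.
Qed.

(* With [q2 = q1'], both Kähler identities reduce to polynomial identities in
   the coordinates and [q1, q2, q3] at [|w|^2]. *)
Lemma radial_form_closed w : 0 < sqnorm w -> forall j k l, (j < 2)%nat -> (k < 2)%nat -> (l < 2)%nat ->
  dW l (fun p => radial_form q1 q2 p j k) w = dW j (fun p => radial_form q1 q2 p l k) w /\
  dWbar l (fun p => radial_form q1 q2 p j k) w = dWbar k (fun p => radial_form q1 q2 p j l) w.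
Proof.
  intros Hs j k l Hj Hk Hl. unfold dW, dWbar, cpartial.
  destruct j as [|[|]], k as [|[|]], l as [|[|]]; try lia;
  rewrite ?rpartial_radial_form_Re, ?rpartial_radial_form_Im by (auto; lia);
  unfold kron, re_prod, im_prod, d_re_prod, d_im_prod, dcoord; simpl;
  split; apply injective_projections; unfold Cmult, Cminus, Cplus, Copp, RtoC, Ci; simpl; ring.
Qed.
End RadialClosed.

Lemma radial_form_hermitian q1 q2 w : hermitian (radial_form q1 q2 w).
Proof.
  intros j k Hj Hk. destruct w as [[x1 y1] [x2 y2]].
  destruct j as [|[|]], k as [|[|]]; try lia;
  unfold radial_form, wcoord; simpl; apply injective_projections;
  unfold Cmult, Cplus, Cconj, RtoC; simpl; ring.
Qed.

Lemma radial_form_neg q1 q2 w j k : (j < 2)%nat -> (k < 2)%nat ->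
  radial_form q1 q2 (C2neg w) j k = radial_form q1 q2 w j k.
Proof.
  intros. assert (E : sqnorm (C2neg w) = sqnorm w).
  { destruct w as [[x1 y1] [x2 y2]]. unfold sqnorm, coord, C2neg, Copp; simpl; ring. }
  unfold radial_form. rewrite E. f_equal. f_equal. destruct w as [[x1 y1] [x2 y2]].
  destruct j as [|[|]], k as [|[|]]; try lia;
  unfold wcoord, C2neg; simpl; apply injective_projections; unfold Cmult, Cconj, Copp; simpl; ring.
Qed.

Lemma radial_form_wedge q1 q2 w :
  wedge_sq_coeff (radial_form q1 q2) w =
  2 * (q1 (sqnorm w) * q1 (sqnorm w) + q1 (sqnorm w) * q2 (sqnorm w) * sqnorm w).
Proof.
  unfold wedge_sq_coeff, radial_form. destruct w as [[x1 y1] [x2 y2]].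
  set (a := q1 _). set (b := q2 _). unfold sqnorm, coord, wcoord; simpl.
  unfold Cmult, Cminus, Cplus, Copp, Cconj, RtoC; simpl. ring.
Qed.

(* The eigenvalues are [q1] (on [w^perp]) and [q1 + |w|^2 q2] (on [w]);
   Lagrange's identity [|v|^2 |w|^2 - |<v,w>|^2 >= 0] is the estimate used. *)
Lemma radial_form_posdef q1 q2 w : 0 < sqnorm w -> 0 < q1 (sqnorm w) ->
  0 < q1 (sqnorm w) + sqnorm w * q2 (sqnorm w) -> posdef (radial_form q1 q2 w).
Proof.
  intros Hs Ha Hb [a0 b0] [a1 b1] Hv.
  assert (HN : 0 < a0*a0 + b0*b0 + a1*a1 + b1*b1).
  { apply (nonzero2_sqnorm ((a0,b0),(a1,b1))) in Hv. unfold sqnorm, coord in Hv; simpl in Hv. lra. }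
  revert Hs Ha Hb. unfold radial_form. set (a := q1 (sqnorm w)). set (b := q2 (sqnorm w)).
  intros Hs Ha Hb.
  destruct w as [[x1 y1] [x2 y2]]. unfold sqnorm, coord in *; simpl in *.
  set (N := a0*a0 + b0*b0 + a1*a1 + b1*b1) in *.
  set (S := x1*x1 + y1*y1 + x2*x2 + y2*y2) in *.
  set (SR := a0*x1 + b0*y1 + a1*x2 + b1*y2).
  set (SI := b0*x1 - a0*y1 + b1*x2 - a1*y2).
  match goal with |- 0 < ?X => replace X with (a * N + b * (SR*SR + SI*SI)) end.
  2: { unfold quad, wcoord, N, SR, SI; simpl. unfold Cmult, Cplus, Cconj, RtoC; simpl. ring. }
  set (DR := a0*x2 - b0*y2 - a1*x1 + b1*y1). set (DI := a0*y2 + b0*x2 - a1*y1 - b1*x1).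
  assert (L : N * S - (SR*SR + SI*SI) = DR*DR + DI*DI) by (unfold N, S, SR, SI, DR, DI; ring).
  assert (0 <= DR*DR + DI*DI) by nra. assert (0 <= SR*SR + SI*SI) by nra.
  destruct (Rle_dec 0 b); [nra|].
  assert (b * (SR*SR + SI*SI) >= b * (N * S)) by nra. nra.
Qed.

Lemma radial_form_flat q1 q2 w : q1 (sqnorm w) = 1 -> q2 (sqnorm w) = 0 ->
  form_eq_at (radial_form q1 q2) omega_hat w.
Proof.
  intros E1 E2 j k Hj Hk. unfold radial_form, omega_hat. rewrite E1, E2.
  destruct (Nat.eqb j k); apply injective_projections; unfold Cmult, Cplus, RtoC; simpl; ring.
Qed.

Section RadialPotential.
Variables (Phi : C2 -> R) (phi q1 q2 : R -> R).
Hypothesis HPhi : forall p, Phi p = phi (sqnorm p).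
Hypothesis Hphi : forall s, 0 < s -> is_derive phi s (q1 s).
Hypothesis Hq1 : forall s, 0 < s -> is_derive q1 s (q2 s).

Lemma dWbar_radial w k : 0 < sqnorm w -> (k < 2)%nat ->
  dWbar k (fun p => RtoC (Phi p)) w =
  (q1 (sqnorm w) * coord (2*k) w, q1 (sqnorm w) * coord (2*k+1) w).
Proof.
  intros Hs Hk.
  assert (HR : forall m, rpartial m (fun p => Re (RtoC (Phi p))) w = 2 * coord m w * q1 (sqnorm w)).
  { intro m. apply is_derive_unique.
    eapply is_derive_ext; [intro s; symmetry; apply HPhi|].
    apply (is_derive_comp_R phi (fun s => sqnorm (shift m s w))).
    - rewrite shift_zero. auto.
    - apply is_derive_sqnorm_shift. }
  assert (HI : forall m, rpartial m (fun p => Im (RtoC (Phi p))) w = 0)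
    by (intro m; unfold rpartial; simpl; apply Derive_const).
  unfold dWbar, cpartial. rewrite !HR, !HI.
  apply injective_projections; unfold Cmult, Cplus, RtoC, Ci; simpl; field.
Qed.

Lemma rpartial_dWbar_radial w i m : 0 < sqnorm w -> (i < 4)%nat ->
  rpartial i (fun p => q1 (sqnorm p) * coord m p) w =
  0 * (2 * coord i w * q2 (sqnorm w))
  + (2 * coord i w * q2 (sqnorm w) * coord m w + q1 (sqnorm w) * dcoord i m).
Proof.
  intros Hs Hi. apply is_derive_unique.
  apply is_derive_ext with (fun s => 0 * q1 (sqnorm (shift i s w)) + q1 (sqnorm (shift i s w)) * coord m (shift i s w)).
  - intro s. rewrite Rmult_0_l, Rplus_0_l. reflexivity.
  - apply is_derive_radial_shift; auto. apply is_derive_coord_shift; auto.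
Qed.

Lemma ddbar_radial w : 0 < sqnorm w -> forall j k, (j < 2)%nat -> (k < 2)%nat ->
  dW j (dWbar k (fun p => RtoC (Phi p))) w = radial_form q1 q2 w j k.
Proof.
  intros Hs j k Hj Hk.
  assert (Hloc : forall i m (F : C2 -> R), (forall p, 0 < sqnorm p -> F p = q1 (sqnorm p) * coord m p) ->
    rpartial i F w = rpartial i (fun p => q1 (sqnorm p) * coord m p) w).
  { intros i m F HF. apply Derive_ext_loc.
    apply (filter_imp (fun s => nonzero2 (shift i s w))); [|apply shift_open_nonzero, nonzero2_sqnorm; auto].
    intros s Hn. apply HF, nonzero2_sqnorm, Hn. }
  unfold dW, cpartial.
  rewrite !(Hloc _ (2*k)%nat (fun p => Re (dWbar k (fun p0 => RtoC (Phi p0)) p)))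
    by (intros p Hp; rewrite dWbar_radial; auto).
  rewrite !(Hloc _ (2*k+1)%nat (fun p => Im (dWbar k (fun p0 => RtoC (Phi p0)) p)))
    by (intros p Hp; rewrite dWbar_radial; auto).
  rewrite !rpartial_dWbar_radial by (auto; lia).
  destruct w as [[x1 y1] [x2 y2]].
  destruct j as [|[|]], k as [|[|]]; try lia;
  unfold radial_form, dcoord, wcoord, coord; simpl; apply injective_projections;
  unfold Cmult, Cplus, Cminus, Copp, Cconj, RtoC, Ci; simpl; field.
Qed.
End RadialPotential.

(* [prof1 A] and [prof2 A A'] are [phi'] and [phi''] recovered from
   [A(s^2) = (s phi'(s))^2] and [A' = dA/dX]. *)
Definition prof1 (A : R -> R) (s : R) : R := sqrt (A (s * s)) / s.
Definition prof2 (A A' : R -> R) (s : R) : R :=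
  (s * s * A' (s * s) - A (s * s)) / (s * s * sqrt (A (s * s))).
Definition profile_form (A A' : R -> R) : form11 := radial_form (prof1 A) (prof2 A A').

Lemma is_derive_prof1 (A A' : R -> R) s : 0 < s -> 0 < A (s * s) -> is_derive A (s * s) (A' (s * s)) ->
  is_derive (prof1 A) s (prof2 A A' s).
Proof.
  intros Hs HA HdA.
  assert (HQ : 0 < sqrt (A (s * s))) by (apply sqrt_lt_R0; auto).
  assert (Hsq : is_derive (fun s => s * s) s (2 * s)) by (auto_derive; [exact I | ring]).
  assert (HAs : is_derive (fun s => A (s * s)) s (2 * s * A' (s * s)))
    by (apply (is_derive_comp_R A (fun s => s * s)); auto).
  eapply is_derive_replace.
  - apply (Derive.is_derive_mult (fun s => sqrt (A (s * s))) (fun s => / s)).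
    + apply (is_derive_sqrt (fun s => A (s * s))); [exact HAs | exact HA].
    + apply (is_derive_inv (fun s => s) s 1); [apply (is_derive_id s) | lra].
  - assert (HQ2 : sqrt (A (s * s)) * sqrt (A (s * s)) = A (s * s)) by (apply sqrt_sqrt; lra).
    unfold prof2. set (Q := sqrt (A (s * s))) in *. rewrite <- HQ2. simpl. field. lra.
Qed.

Lemma prof1_pos A s : 0 < s -> 0 < A (s * s) -> 0 < prof1 A s.
Proof. intros. apply Rdiv_lt_0_compat; [apply sqrt_lt_R0|]; auto. Qed.

Lemma prof12_eq A A' s : 0 < s -> 0 < A (s * s) ->
  prof1 A s + s * prof2 A A' s = s * A' (s * s) / sqrt (A (s * s)).
Proof.
  intros Hs HA. assert (HQ : 0 < sqrt (A (s * s))) by (apply sqrt_lt_R0; auto).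
  assert (HQ2 : sqrt (A (s * s)) * sqrt (A (s * s)) = A (s * s)) by (apply sqrt_sqrt; lra).
  unfold prof1, prof2. set (Q := sqrt (A (s * s))) in *. rewrite <- HQ2. field. lra.
Qed.

Lemma prof_det A A' s : 0 < s -> 0 < A (s * s) ->
  prof1 A s * prof1 A s + prof1 A s * prof2 A A' s * s = A' (s * s).
Proof.
  intros Hs HA. assert (HQ : 0 < sqrt (A (s * s))) by (apply sqrt_lt_R0; auto).
  assert (HQ2 : sqrt (A (s * s)) * sqrt (A (s * s)) = A (s * s)) by (apply sqrt_sqrt; lra).
  unfold prof1, prof2. set (Q := sqrt (A (s * s))) in *. rewrite <- HQ2. field. lra.
Qed.

Lemma profile_form_wedge A A' w : 0 < sqnorm w -> 0 < A (sqnorm w * sqnorm w) ->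
  wedge_sq_coeff (profile_form A A') w = 2 * A' (sqnorm w * sqnorm w).
Proof. intros. unfold profile_form. rewrite radial_form_wedge, prof_det; auto. Qed.

Lemma profile_form_posdef A A' w : 0 < sqnorm w -> 0 < A (sqnorm w * sqnorm w) ->
  0 < A' (sqnorm w * sqnorm w) -> posdef (profile_form A A' w).
Proof.
  intros Hs HA HA'. apply radial_form_posdef; auto; [apply prof1_pos; auto|].
  rewrite prof12_eq by auto.
  apply Rdiv_lt_0_compat; [apply Rmult_lt_0_compat | apply sqrt_lt_R0]; auto.
Qed.

Lemma profile_form_local A A' B B' w :
  A (sqnorm w * sqnorm w) = B (sqnorm w * sqnorm w) ->
  A' (sqnorm w * sqnorm w) = B' (sqnorm w * sqnorm w) ->
  form_eq_at (profile_form A A') (profile_form B B') w.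
Proof. intros EA EA' j k _ _. unfold profile_form, radial_form, prof1, prof2. rewrite EA, EA'. reflexivity. Qed.

Lemma profile_form_flat A A' w : 0 < sqnorm w ->
  A (sqnorm w * sqnorm w) = sqnorm w * sqnorm w -> A' (sqnorm w * sqnorm w) = 1 ->
  form_eq_at (profile_form A A') omega_hat w.
Proof.
  intros Hs EA EA'. apply radial_form_flat; unfold prof1, prof2; rewrite EA, ?EA'.
  - rewrite sqrt_square by lra. field. lra.
  - unfold Rdiv. ring.
Qed.

(* In a chart point [p = (z, u)] of [X~]: [chart_c p = 1 + |z|^2] and
   [chart_X p = |u|^2 (1 + |z|^2)^2], which is [|w|^4] off [E] and [0] on [E]. *)
Definition chart_z2 (p : C2) : R := coord 0 p * coord 0 p + coord 1 p * coord 1 p.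
Definition chart_c (p : C2) : R := 1 + chart_z2 p.
Definition chart_X (p : C2) : R :=
  (coord 2 p * coord 2 p + coord 3 p * coord 3 p) * chart_c p * chart_c p.

Definition profile_chart (A A' : R -> R) (p : C2) (a b : nat) : C :=
  let X := chart_X p in
  let c := chart_c p in
  let g := c * A' X / (2 * sqrt (A X)) in
  match a, b with
  | O, O => RtoC (sqrt (A X) / c + chart_z2 p * (X * A' X - A X) / (c * c * sqrt (A X)))
  | O, _ => Cmult (RtoC g) (Cmult (Cconj (fst p)) (snd p))
  | _, O => Cmult (RtoC g) (Cmult (fst p) (Cconj (snd p)))
  | _, _ => RtoC (c * c * A' X / (4 * sqrt (A X)))
  end.

Lemma profile_chart_pullback (A A' : R -> R) (ch : bool) z u :
  u <> RtoC 0 -> 0 < A (chart_X (z, Cmult u u)) -> forall a b, (a < 2)%nat -> (b < 2)%nat ->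
  profile_chart A A' (z, Cmult u u) a b =
  pullback (chart_jac ch z u) (profile_form A A' (chart_pt ch z u)) a b.
Proof.
  intros Hu HA a b Ha Hb. destruct z as [zp zq], u as [sa sb].
  assert (Hr : 0 < sa * sa + sb * sb).
  { destruct (Req_dec sa 0), (Req_dec sb 0); try nra. subst. exfalso. apply Hu. reflexivity. }
  set (S := (sa * sa + sb * sb) * (1 + (zp * zp + zq * zq))).
  assert (E1 : sqnorm (chart_pt ch (zp, zq) (sa, sb)) = S)
    by (destruct ch; unfold sqnorm, chart_pt, coord, S, Cmult; simpl; ring).
  assert (E2 : chart_X (@pair C C (zp, zq) (Cmult (sa, sb) (sa, sb))) = S * S)
    by (unfold chart_X, chart_c, chart_z2, coord, S, Cmult; simpl; ring).
  rewrite E2 in HA. unfold profile_chart, profile_form, radial_form, prof1, prof2. cbv zeta.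
  rewrite E1, E2.
  assert (HQ2 : sqrt (A (S * S)) * sqrt (A (S * S)) = A (S * S)) by (apply sqrt_sqrt; lra).
  assert (HQ : 0 < sqrt (A (S * S))) by (apply sqrt_lt_R0; auto).
  set (Q := sqrt (A (S * S))) in *. set (B := A' (S * S)). rewrite <- HQ2. clearbody Q B.
  assert (HC : 0 < 1 + (zp * zp + zq * zq)) by nra.
  unfold S in *. clear E1 E2 HA HQ2.
  destruct ch, a as [|[|]], b as [|[|]]; try lia;
  unfold chart_c, chart_z2, coord, chart_pt, chart_jac, pullback, wcoord; simpl;
  apply injective_projections; unfold Cmult, Cplus, Cconj, Cinv, RtoC; simpl;
  field; repeat split; nra.
Qed.

Section Profile.
Variables (a : R) (A A' : R -> R).
Hypothesis Ha : a < 0.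
Hypothesis HA : smooth_above a A.
Hypothesis HA' : smooth_above a A'.
Hypothesis HdA : forall X, a < X -> is_derive A X (A' X).
Hypothesis Hpos : forall X, a < X -> 0 < A X.
Hypothesis Hpos' : forall X, a < X -> 0 < A' X.

Lemma sq_gt s : a < s * s.
Proof. nra. Qed.

Lemma smooth_above_sqrtA : smooth_above a (fun X => sqrt (A X)).
Proof. apply sa_sqrt; auto. Qed.

Lemma smooth_above_prof1 : smooth_above 0 (prof1 A).
Proof.
  apply sa_ext with (fun s => sqrt (A (s * s)) * / s).
  - apply sa_mult; [|apply sa_inv; [constructor | auto]].
    apply (sa_comp 0 a (fun X => sqrt (A X)) (fun s => s * s));
      [apply smooth_above_sqrtA | repeat constructor | intros; apply sq_gt].
  - reflexivity.
Qed.

Lemma smooth_above_prof2 : smooth_above 0 (prof2 A A').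
Proof.
  assert (HQ : forall s, 0 < sqrt (A (s * s))) by (intro; apply sqrt_lt_R0, Hpos, sq_gt).
  apply sa_ext with (fun s => (s * s * A' (s * s) + (-1) * A (s * s)) *
                              (/ (s * s) * / sqrt (A (s * s)))).
  - assert (Hcomp : forall g, smooth_above a g -> smooth_above 0 (fun s => g (s * s)))
      by (intros g Hg; apply sa_comp with a; [auto | repeat constructor | intros; apply sq_gt]).
    assert (Hsq : smooth_above 0 (fun s => s * s)) by repeat constructor.
    apply sa_mult; [apply sa_plus; apply sa_mult|apply sa_mult; apply sa_inv].
    + exact Hsq.
    + apply (Hcomp A'), HA'.
    + constructor.
    + apply (Hcomp A), HA.
    + exact Hsq.
    + intros; nra.
    + apply (Hcomp (fun X => sqrt (A X))), smooth_above_sqrtA.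
    + auto.
  - intros s Hs. unfold prof2. specialize (HQ s). field. split; nra.
Qed.

Lemma chart_X_ge0 p : 0 <= chart_X p.
Proof.
  unfold chart_X, chart_c, chart_z2.
  assert (0 <= coord 0 p * coord 0 p + coord 1 p * coord 1 p) by nra.
  assert (0 <= coord 2 p * coord 2 p + coord 3 p * coord 3 p) by nra.
  apply Rmult_le_pos; [apply Rmult_le_pos|]; lra.
Qed.

Lemma chart_c_pos p : 0 < chart_c p.
Proof. unfold chart_c, chart_z2. nra. Qed.

Lemma smooth_expr_chart (g : R -> R) : smooth_above a g ->
  smooth_expr (fun _ => True) (fun p => g (chart_X p)).
Proof.
  intro Hg. apply se_comp with a; auto.
  - unfold chart_X, chart_c, chart_z2. repeat constructor.
  - intros p _. generalize (chart_X_ge0 p). lra.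
Qed.

Lemma chart_sqrtA_pos p : 0 < sqrt (A (chart_X p)).
Proof. apply sqrt_lt_R0, Hpos. generalize (chart_X_ge0 p). lra. Qed.

Lemma smooth_expr_chart_atoms :
  smooth_expr (fun _ => True) (fun p => sqrt (A (chart_X p))) /\
  smooth_expr (fun _ => True) (fun p => / sqrt (A (chart_X p))) /\
  smooth_expr (fun _ => True) (fun p => A (chart_X p)) /\
  smooth_expr (fun _ => True) (fun p => A' (chart_X p)) /\
  smooth_expr (fun _ => True) (fun p => / chart_c p) /\
  smooth_expr (fun _ => True) chart_c /\ smooth_expr (fun _ => True) chart_z2 /\
  smooth_expr (fun _ => True) chart_X.
Proof.
  repeat split; try (apply smooth_expr_chart; auto).
  - apply (smooth_expr_chart (fun X => sqrt (A X))), smooth_above_sqrtA.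
  - apply (smooth_expr_chart (fun X => / sqrt (A X))), sa_inv;
      [apply smooth_above_sqrtA | intros; apply sqrt_lt_R0; auto].
  - apply (se_comp _ 0 (fun y => / y)); [apply sa_inv; [constructor | auto] |
      unfold chart_c, chart_z2; smooth_expr_auto | intros; apply chart_c_pos].
  - unfold chart_c, chart_z2; smooth_expr_auto.
  - unfold chart_z2; smooth_expr_auto.
  - unfold chart_X, chart_c, chart_z2; smooth_expr_auto.
Qed.

Lemma profile_chart_smooth b c : (b < 2)%nat -> (c < 2)%nat ->
  smoothC_on (fun _ => True) (fun p => profile_chart A A' p b c).
Proof.
  intros Hb Hc. assert (HQ := chart_sqrtA_pos).
  destruct smooth_expr_chart_atoms as (HsA & HisA & HAX & HA'X & Hic & Hc0 & Hz2 & HX).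
  assert (Hsm : forall f f', (forall p, f' p = f p) -> smooth_expr (fun _ => True) f' ->
      smooth_on (fun _ => True) f)
    by (intros f f' E; apply smooth_on_of_expr; auto using shift_open_True).
  set (g := fun p => chart_c p * A' (chart_X p) * / 2 * / sqrt (A (chart_X p))).
  assert (Hg : smooth_expr (fun _ => True) g) by (unfold g; smooth_expr_auto).
  assert (Eg : forall p, g p = chart_c p * A' (chart_X p) / (2 * sqrt (A (chart_X p))))
    by (intro p; unfold g; specialize (HQ p); field; lra).
  destruct b as [|[|]], c as [|[|]]; try lia; split; unfold profile_chart; cbv zeta.
  - apply Hsm with (fun p => sqrt (A (chart_X p)) * / chart_c p + chart_z2 p *
      (chart_X p * A' (chart_X p) + (-1) * A (chart_X p)) * (/ chart_c p * / chart_c p) * / sqrt (A (chart_X p)));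
      [|smooth_expr_auto].
    intro p. simpl. generalize (chart_c_pos p) (HQ p). intros. field. lra.
  - apply Hsm with (fun _ => 0); [reflexivity | smooth_expr_auto].
  - apply Hsm with (fun p => g p * (coord 0 p * coord 2 p + coord 1 p * coord 3 p)); [|smooth_expr_auto].
    intros [[x1 y1] [x2 y2]]. rewrite Eg. unfold coord. simpl. ring.
  - apply Hsm with (fun p => g p * (coord 0 p * coord 3 p + (-1) * (coord 1 p * coord 2 p))); [|smooth_expr_auto].
    intros [[x1 y1] [x2 y2]]. rewrite Eg. unfold coord. simpl. ring.
  - apply Hsm with (fun p => g p * (coord 0 p * coord 2 p + coord 1 p * coord 3 p)); [|smooth_expr_auto].
    intros [[x1 y1] [x2 y2]]. rewrite Eg. unfold coord. simpl. ring.
  - apply Hsm with (fun p => g p * (coord 1 p * coord 2 p + (-1) * (coord 0 p * coord 3 p))); [|smooth_expr_auto].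
    intros [[x1 y1] [x2 y2]]. rewrite Eg. unfold coord. simpl. ring.
  - apply Hsm with (fun p => chart_c p * chart_c p * A' (chart_X p) * / 4 * / sqrt (A (chart_X p)));
      [|smooth_expr_auto].
    intro p. simpl. generalize (HQ p). intros. field. lra.
  - apply Hsm with (fun _ => 0); [reflexivity | smooth_expr_auto].
Qed.

(* On [E] ([u = 0]) the chart matrix is diagonal with entries
   [sqrt (A 0) / c^2] and [c^2 A'(0) / (4 sqrt (A 0))]. *)
Lemma profile_chart_posdef_E z : posdef (profile_chart A A' (z, RtoC 0)).
Proof.
  destruct z as [zp zq].
  assert (EX : chart_X (@pair C C (zp, zq) (RtoC 0)) = 0) by (unfold chart_X, coord, RtoC; simpl; ring).
  assert (HA0 : 0 < A 0) by auto. assert (HA'0 : 0 < A' 0) by auto.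
  assert (HQ : 0 < sqrt (A 0)) by (apply sqrt_lt_R0; auto).
  intros [a0 b0] [a1 b1] Hv.
  assert (HN : 0 < a0*a0 + b0*b0 + a1*a1 + b1*b1).
  { apply (nonzero2_sqnorm ((a0,b0),(a1,b1))) in Hv. unfold sqnorm, coord in Hv; simpl in Hv. lra. }
  generalize (chart_c_pos (@pair C C (zp, zq) (RtoC 0))). intro HC.
  unfold quad, profile_chart. cbv zeta. rewrite EX.
  set (c := chart_c (@pair C C (zp, zq) (RtoC 0))) in *.
  assert (Ec : chart_z2 (@pair C C (zp, zq) (RtoC 0)) = c - 1) by (unfold c, chart_c; ring).
  rewrite Ec. unfold RtoC, Cmult, Cplus, Cconj; simpl.
  match goal with |- 0 < ?X =>
    replace X with ((a0*a0+b0*b0) * (sqrt (A 0) / (c*c)) + (a1*a1+b1*b1) * (c*c*A' 0/(4*sqrt (A 0))))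
  end.
  2: { assert (HQ2 : sqrt (A 0) * sqrt (A 0) = A 0) by (apply sqrt_sqrt; lra).
       set (Q := sqrt (A 0)) in *. rewrite <- HQ2. field. split; lra. }
  assert (0 < sqrt (A 0) / (c*c)) by (apply Rdiv_lt_0_compat; nra).
  assert (0 < c*c*A' 0/(4*sqrt (A 0)))
    by (apply Rdiv_lt_0_compat; [apply Rmult_lt_0_compat; [nra | lra] | lra]).
  destruct (Rlt_dec 0 (a0*a0+b0*b0)); nra.
Qed.

Theorem profile_form_closed_real_pos : closed_real_pos_11_form (profile_form A A').
Proof.
  destruct (smooth_above_derive 0 (prof2 A A') smooth_above_prof2) as [p3 [_ Hp3]].
  split; [|split; [|split; [|split; [|split]]]].
  - intros w _ j k Hj Hk. apply radial_form_neg; auto.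
  - intros j k Hj Hk. apply radial_form_smooth; auto using smooth_above_prof1, smooth_above_prof2.
  - intros w _. apply radial_form_hermitian.
  - intros w Hw j k l Hj Hk Hl. apply (radial_form_closed _ _ p3); auto.
    + intros s Hs. apply is_derive_prof1; [exact Hs | apply Hpos, sq_gt | apply HdA, sq_gt].
    + apply nonzero2_sqnorm, Hw.
  - intros w Hw. apply nonzero2_sqnorm in Hw. apply profile_form_posdef; [exact Hw | apply Hpos, sq_gt | apply Hpos', sq_gt].
  - intro ch. exists (profile_chart A A'). split; [|split].
    + intros b c Hb Hc. apply profile_chart_smooth; auto.
    + intros z u Hu b c Hb Hc. apply profile_chart_pullback; auto.
      apply Hpos. generalize (chart_X_ge0 (z, Cmult u u)). lra.
    + apply profile_chart_posdef_E.
Qed.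
End Profile.

Definition EH_radial (t s : R) : R :=
  sqrt (s * s + t ^ 4) + t ^ 2 * ln (s / (sqrt (s * s + t ^ 4) + t ^ 2)).
Definition EH_profile (t X : R) : R := X + t ^ 4.

Lemma EH_potential_radial t w : EH_potential t w = EH_radial t (sqnorm w).
Proof.
  unfold EH_potential, EH_radial. rewrite <- (r_of_sq w).
  replace (r_of w ^ 4) with (r_of w ^ 2 * r_of w ^ 2) by ring. reflexivity.
Qed.

Lemma is_derive_EH_radial t s : 0 < t -> 0 < s -> is_derive (EH_radial t) s (prof1 (EH_profile t) s).
Proof.
  intros Ht Hs. unfold EH_radial, prof1, EH_profile.
  assert (HT : 0 < t ^ 2) by (apply pow_lt; lra).
  assert (HT2 : t ^ 4 = t ^ 2 * t ^ 2) by ring.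
  assert (HQ : 0 < sqrt (s * s + t ^ 4)) by (apply sqrt_lt_R0; nra).
  assert (HQ2 : sqrt (s * s + t ^ 4) * sqrt (s * s + t ^ 4) = s * s + t ^ 4) by (apply sqrt_sqrt; nra).
  auto_derive.
  - simpl in *. repeat split; try nra.
    apply Rmult_lt_0_compat; [lra | apply Rinv_0_lt_compat; lra].
  - replace (t * (t * (t * (t * 1)))) with (t ^ 4) by ring.
    replace (t * (t * 1)) with (t ^ 2) by ring.
    set (Q := sqrt (s * s + t ^ 4)) in *. set (T := t ^ 2) in *. rewrite HT2 in HQ2.
    field_simplify; [|lra | repeat split; lra].
    assert (0 < s * Q * Q + s * Q * T) by (assert (0 < s * Q) by nra; nra).
    apply Rdiv_eq_cross; [simpl; nra | lra |].
    apply Rminus_diag_uniq.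
    replace (_ - _) with (2 * s * Q * (s * s + T * T - Q * Q)) by (simpl; ring).
    rewrite HQ2. ring.
Qed.

Lemma omega_tilde_profile t w : 0 < t -> nonzero2 w ->
  form_eq_at (omega_tilde t) (profile_form (EH_profile t) (fun _ => 1)) w.
Proof.
  intros Ht Hw j k Hj Hk. apply nonzero2_sqnorm in Hw.
  assert (Ht4 : 0 < t ^ 4) by (apply pow_lt; lra).
  unfold omega_tilde, profile_form.
  apply (ddbar_radial _ (EH_radial t)); auto.
  - apply EH_potential_radial.
  - intros s Hs. apply is_derive_EH_radial; auto.
  - intros s Hs. apply is_derive_prof1; unfold EH_profile; [auto | nra |].
    auto_derive; [exact I | ring].
Qed.


Section Glue.
Variables (step' : R -> R) (M t : R).
Hypothesis Hstep' : smooth_above (-1) step'.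
Hypothesis Hdstep : forall y, -1 < y -> is_derive step y (step' y).
Hypothesis Hstep'_max : forall y, -1 < y -> step' y <= M.
Hypothesis HM : 1 <= M.
Hypothesis Ht : 0 < t.

(* The transition happens for [X / t^4] in [[glue_start, glue_start + M + 1]];
   stretching it over length [M + 1] keeps [A' >= 1 / (M + 1)]. *)
Definition glue_K : R := 2 * M + 4.
Definition glue_start : R := glue_K / 16 + 1.
Definition glue_arg (X : R) : R := (X / t ^ 4 - glue_start) / (M + 1).
Definition glue_profile (X : R) : R := X + t ^ 4 - t ^ 4 * step (glue_arg X).
Definition glue_profile' (X : R) : R := 1 - step' (glue_arg X) / (M + 1).

Lemma t4_pos : 0 < t ^ 4.
Proof. apply pow_lt; auto. Qed.

Lemma glue_arg_lt X c : X < t ^ 4 * c -> glue_arg X < (c - glue_start) / (M + 1).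
Proof.
  intro H. generalize t4_pos. intro. unfold glue_arg.
  apply Rmult_lt_compat_r; [apply Rinv_0_lt_compat; lra|].
  apply Rplus_lt_compat_r. apply Rmult_lt_reg_r with (t ^ 4); auto.
  unfold Rdiv. rewrite Rmult_assoc, Rinv_l by lra. lra.
Qed.

Lemma glue_arg_gt X c : t ^ 4 * c < X -> (c - glue_start) / (M + 1) < glue_arg X.
Proof.
  intro H. generalize t4_pos. intro. unfold glue_arg.
  apply Rmult_lt_compat_r; [apply Rinv_0_lt_compat; lra|].
  apply Rplus_lt_compat_r. apply Rmult_lt_reg_r with (t ^ 4); auto.
  unfold Rdiv. rewrite Rmult_assoc, Rinv_l by lra. lra.
Qed.

Lemma glue_arg_domain X : - t ^ 4 / 2 < X -> -1 < glue_arg X.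
Proof.
  intro H. generalize t4_pos. intro.
  apply Rle_lt_trans with ((- 1 / 2 - glue_start) / (M + 1)).
  - unfold glue_start, glue_K. apply (Rmult_le_reg_r (M + 1)); [lra|].
    unfold Rdiv. rewrite Rmult_assoc, Rinv_l by lra. lra.
  - apply glue_arg_gt. lra.
Qed.

Lemma is_derive_glue_profile X : - t ^ 4 / 2 < X -> is_derive glue_profile X (glue_profile' X).
Proof.
  intro H. generalize t4_pos. intro.
  assert (Harg : is_derive glue_arg X (/ t ^ 4 / (M + 1))) by (unfold glue_arg; auto_derive; [lra | field; lra]).
  unfold glue_profile, glue_profile'. eapply is_derive_replace.
  - apply (is_derive_minus (fun X => X + t ^ 4) (fun X => t ^ 4 * step (glue_arg X))).
    + auto_derive; [exact I | reflexivity].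
    + apply is_derive_scal, is_derive_comp_R; [apply Hdstep, glue_arg_domain; auto | exact Harg].
  - unfold minus, plus, opp; simpl. field. lra.
Qed.

Lemma glue_profile_pos X : - t ^ 4 / 2 < X -> 0 < glue_profile X.
Proof.
  intro H. generalize t4_pos (step_bounds (glue_arg X)). intros. unfold glue_profile.
  assert (t ^ 4 * step (glue_arg X) <= t ^ 4)
    by (rewrite <- (Rmult_1_r (t ^ 4)) at 2; apply Rmult_le_compat_l; lra).
  destruct (Rle_dec X 0); [|lra].
  rewrite step_le0; [lra|]. left. apply Rlt_le_trans with ((1 - glue_start) / (M + 1)).
  - apply glue_arg_lt. lra.
  - unfold glue_start, glue_K. apply (Rmult_le_reg_r (M + 1)); [lra|].
    unfold Rdiv. rewrite Rmult_assoc, Rinv_l by lra. lra.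
Qed.

Lemma glue_profile'_ge X : - t ^ 4 / 2 < X -> / (M + 1) <= glue_profile' X.
Proof.
  intro H. generalize (Hstep'_max _ (glue_arg_domain X H)). intro. unfold glue_profile'.
  apply Rle_trans with (1 - M / (M + 1)); [right; field; lra|].
  apply Rplus_le_compat_l, Ropp_le_contravar, Rmult_le_compat_r; [left; apply Rinv_0_lt_compat; lra | auto].
Qed.

Lemma smooth_above_glue_arg a : smooth_above a glue_arg.
Proof.
  apply sa_ext with (fun X => X * (/ t ^ 4 / (M + 1)) + (- glue_start / (M + 1))).
  - repeat constructor.
  - intros. unfold glue_arg. field. generalize t4_pos. lra.
Qed.

Lemma smooth_above_glue_profile : smooth_above (- t ^ 4 / 2) glue_profile.
Proof.
  apply sa_ext with (fun X => (X + t ^ 4) + (- t ^ 4) * step (glue_arg X)).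
  - apply sa_plus; [repeat constructor|]. apply sa_mult; [constructor|].
    apply sa_comp with (-1); [apply smooth_above_step | apply smooth_above_glue_arg | apply glue_arg_domain].
  - intros. unfold glue_profile. ring.
Qed.

Lemma smooth_above_glue_profile' : smooth_above (- t ^ 4 / 2) glue_profile'.
Proof.
  apply sa_ext with (fun X => 1 + (- / (M + 1)) * step' (glue_arg X)).
  - apply sa_plus; [constructor|]. apply sa_mult; [constructor|].
    apply sa_comp with (-1); [auto | apply smooth_above_glue_arg | apply glue_arg_domain].
  - intros. unfold glue_profile'. field. lra.
Qed.

Theorem glue_profile_form_closed_real_pos :
  closed_real_pos_11_form (profile_form glue_profile glue_profile').
Proof.
  generalize t4_pos. intro.
  apply (profile_form_closed_real_pos (- t ^ 4 / 2)).
  - lra.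
  - apply smooth_above_glue_profile.
  - apply smooth_above_glue_profile'.
  - apply is_derive_glue_profile.
  - apply glue_profile_pos.
  - intros X HX. apply Rlt_le_trans with (/ (M + 1)); [apply Rinv_0_lt_compat; lra|].
    apply glue_profile'_ge; auto.
Qed.

Hypothesis Hstep'_low : forall y, -1 < y -> y < 0 -> step' y = 0.
Hypothesis Hstep'_high : forall y, 1 < y -> step' y = 0.

Lemma glue_profile_EH X : - t ^ 4 / 2 < X -> X <= t ^ 4 * (glue_K / 16) ->
  glue_profile X = EH_profile t X /\ glue_profile' X = 1.
Proof.
  intros H1 H2. generalize t4_pos. intro.
  assert (Harg : glue_arg X < 0).
  { replace 0 with ((glue_start - glue_start) / (M + 1)) by (field; lra).
    apply glue_arg_lt. unfold glue_start. nra. }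
  unfold glue_profile, glue_profile', EH_profile.
  rewrite step_le0, Hstep'_low by (auto using glue_arg_domain; lra). split; field; lra.
Qed.

Lemma glue_profile_flat X : t ^ 4 * (glue_start + (M + 1)) < X ->
  glue_profile X = X /\ glue_profile' X = 1.
Proof.
  intro H. generalize t4_pos. intro.
  assert (Harg : 1 < glue_arg X).
  { replace 1 with ((glue_start + (M + 1) - glue_start) / (M + 1)) by (field; lra).
    apply glue_arg_gt. auto. }
  unfold glue_profile, glue_profile'.
  rewrite step_ge1, Hstep'_high by lra. split; field; lra.
Qed.
Lemma glue_form_EH w : nonzero2 w -> sqnorm w * sqnorm w <= t ^ 4 * (glue_K / 16) ->
  form_eq_at (profile_form glue_profile glue_profile') (omega_tilde t) w.
Proof.
  intros Hw HX j k Hj Hk. generalize t4_pos. intro.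
  destruct (glue_profile_EH (sqnorm w * sqnorm w)) as [E E']; [nra | exact HX |].
  rewrite (profile_form_local _ _ (EH_profile t) (fun _ => 1) w E E') by auto.
  symmetry. apply omega_tilde_profile; auto.
Qed.

Lemma glue_form_flat w : nonzero2 w -> t ^ 4 * (glue_start + (M + 1)) < sqnorm w * sqnorm w ->
  form_eq_at (profile_form glue_profile glue_profile') omega_hat w.
Proof.
  intros Hw HX. apply nonzero2_sqnorm in Hw.
  destruct (glue_profile_flat _ HX) as [E E']. apply profile_form_flat; auto.
Qed.

Lemma glue_form_wedge w : nonzero2 w ->
  wedge_sq_coeff (profile_form glue_profile glue_profile') w = 2 * glue_profile' (sqnorm w * sqnorm w).
Proof.
  intro Hw. apply nonzero2_sqnorm in Hw. generalize t4_pos. intro.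
  apply profile_form_wedge; auto. apply glue_profile_pos. nra.
Qed.

Lemma glue_form_wedge_ge w : nonzero2 w ->
  2 / (M + 1) <= wedge_sq_coeff (profile_form glue_profile glue_profile') w.
Proof.
  intro Hw. rewrite glue_form_wedge by auto. apply nonzero2_sqnorm in Hw. generalize t4_pos. intro.
  generalize (glue_profile'_ge (sqnorm w * sqnorm w)). unfold Rdiv. nra.
Qed.

Lemma glue_form_wedge_eq w y0 : 0 <= y0 -> step' y0 = M ->
  sqnorm w * sqnorm w = t ^ 4 * (glue_start + (M + 1) * y0) ->
  wedge_sq_coeff (profile_form glue_profile glue_profile') w = 2 / (M + 1).
Proof.
  intros Hy0 Hmax HX. generalize t4_pos. intro.
  assert (Hw : nonzero2 w).
  { apply nonzero2_sqnorm. generalize (sqnorm_ge0 w). intro.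
    assert (0 < sqnorm w * sqnorm w)
      by (rewrite HX; apply Rmult_lt_0_compat; [lra | unfold glue_start, glue_K; nra]). nra. }
  rewrite glue_form_wedge, HX by auto. unfold glue_profile'.
  replace (glue_arg (t ^ 4 * (glue_start + (M + 1) * y0))) with y0 by (unfold glue_arg; field; lra).
  rewrite Hmax. field. lra.
Qed.
End Glue.

Lemma glue_constants M y0 : 1 <= M -> 0 <= y0 <= 1 ->
  glue_K M / 16 < glue_start M + (M + 1) * y0 < glue_K M /\ glue_start M + (M + 1) < glue_K M.
Proof. intros. unfold glue_start, glue_K. split; [split|]; nra. Qed.

Lemma inv_sqrt_succ M : 1 <= M -> 0 < / sqrt (M + 1) < 1 /\ (/ sqrt (M + 1)) ^ 2 = / (M + 1).
Proof.
  intro HM. assert (Hs : 1 < sqrt (M + 1)) by (rewrite <- sqrt_1 at 1; apply sqrt_lt_1_alt; lra).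
  split; [split|].
  - apply Rinv_0_lt_compat. lra.
  - rewrite <- Rinv_1 at 2. apply Rinv_lt_contravar; lra.
  - rewrite pow_inv, <- Rsqr_pow2, Rsqr_sqrt by lra. reflexivity.
Qed.

Definition root4 (c : R) : R := sqrt (sqrt c).

Lemma root4_pow4 c : 0 <= c -> root4 c ^ 4 = c.
Proof.
  intro. unfold root4. replace (sqrt (sqrt c) ^ 4) with ((sqrt (sqrt c) ^ 2) ^ 2) by ring.
  rewrite pow2_sqrt by apply sqrt_pos. apply pow2_sqrt. auto.
Qed.

Lemma root4_ge0 c : 0 <= root4 c.
Proof. apply sqrt_pos. Qed.

Lemma root4_lt a b : 0 <= a -> a < b -> root4 a < root4 b.
Proof. intros. apply sqrt_lt_1_alt. split; [apply sqrt_pos | apply sqrt_lt_1_alt; lra]. Qed.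

Lemma mult_root4_div2 t c : 0 <= c -> t * root4 c / 2 = t * root4 (c / 16).
Proof.
  intro. unfold root4.
  assert (E16 : sqrt 16 = 4) by (rewrite <- (sqrt_square 4) by lra; f_equal; lra).
  assert (E4 : sqrt 4 = 2) by (rewrite <- (sqrt_square 2) by lra; f_equal; lra).
  rewrite sqrt_div, E16, sqrt_div, E4 by (try apply sqrt_pos; lra). field.
Qed.

Lemma r_of_pow4 w : r_of w ^ 4 = sqnorm w * sqnorm w.
Proof. rewrite <- r_of_sq. ring. Qed.

Lemma r_of_ge0 w : 0 <= r_of w.
Proof. rewrite r_of_sqnorm. apply sqrt_pos. Qed.

Lemma sqnorm_le_of_r_of w t c : 0 < t -> 0 <= c -> r_of w <= t * root4 c ->
  sqnorm w * sqnorm w <= t ^ 4 * c.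
Proof.
  intros Ht Hc H. rewrite <- r_of_pow4, <- (root4_pow4 c), <- Rpow_mult_distr by auto.
  apply pow_incr. split; [apply r_of_ge0 | exact H].
Qed.

Lemma sqnorm_ge_of_r_of w t c : 0 < t -> 0 <= c -> t * root4 c <= r_of w ->
  t ^ 4 * c <= sqnorm w * sqnorm w.
Proof.
  intros Ht Hc H. rewrite <- r_of_pow4, <- (root4_pow4 c), <- Rpow_mult_distr by auto.
  apply pow_incr. split; [apply Rmult_le_pos; [lra | apply root4_ge0] | exact H].
Qed.

Lemma sqnorm_eq_of_r_of w t c : 0 <= c -> r_of w = t * root4 c -> sqnorm w * sqnorm w = t ^ 4 * c.
Proof. intros Hc H. rewrite <- r_of_pow4, H, Rpow_mult_distr, root4_pow4; auto. Qed.

Theorem proposition6p3 :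
  exists (Rr ups : R), 0 < Rr /\ 0 < ups < 1 /\
  forall t : R, 0 < t ->
  exists hc : form11,
    closed_real_pos_11_form hc /\
    (* (1) *)
    (forall w, nonzero2 w -> r_of w <= t * Rr / 2 -> form_eq_at hc (omega_tilde t) w) /\
    (* (2) *)
    (exists V : C2 -> Prop, is_open2 V /\
       (forall w, t * Rr <= r_of w -> V w) /\
       (forall w, V w -> nonzero2 w -> form_eq_at hc omega_hat w)) /\
    (* (3) *)
    (forall w, nonzero2 w -> 2 * ups ^ 2 <= wedge_sq_coeff hc w) /\
    (exists rt, t * Rr / 2 < rt < t * Rr /\
       forall w, r_of w = rt -> wedge_sq_coeff hc w = 2 * ups ^ 2).
Proof.
  destruct step_derivative as [step' [M [ym [Hs' [Hd [Hlow [Hhigh [Hmax [Hym [HM HM1]]]]]]]]]].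
  destruct (glue_constants M ym HM1 Hym) as [[HY1 HY2] HK].
  assert (HK0 : 0 < glue_K M) by (unfold glue_K; lra).
  destruct (inv_sqrt_succ M HM1) as [Hups Hups2].
  exists (root4 (glue_K M)), (/ sqrt (M + 1)).
  split; [apply Rle_lt_trans with (root4 0); [apply root4_ge0 | apply root4_lt; lra]|].
  split; [exact Hups|]. intros t Ht.
  exists (profile_form (glue_profile M t) (glue_profile' step' M t)).
  rewrite mult_root4_div2, Hups2 by lra.
  split; [apply glue_profile_form_closed_real_pos; auto|]. split; [|split; [|split]].
  - intros w Hw Hr. apply glue_form_EH; auto. apply sqnorm_le_of_r_of; auto; lra.
  - exists (fun w => t ^ 4 * (glue_start M + (M + 1)) < sqnorm w * sqnorm w). split; [|split].
    + apply smooth_expr_open. unfold sqnorm. smooth_expr_auto.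
    + intros w Hw. eapply Rlt_le_trans; [|apply sqnorm_ge_of_r_of, Hw; auto; lra].
      apply Rmult_lt_compat_l; [apply t4_pos|]; auto.
    + intros w Hw Hnz. apply glue_form_flat; auto.
  - intros w Hw. apply glue_form_wedge_ge; auto.
  - exists (t * root4 (glue_start M + (M + 1) * ym)). split; [split; apply Rmult_lt_compat_l, root4_lt; auto; lra|].
    intros w Hw. apply glue_form_wedge_eq with ym; try tauto.
    apply sqnorm_eq_of_r_of; auto. lra.
Qed.
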